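(* Let $S_j$ be local potentials satisfying (A)–(E). For every $\omega\in\mathbb{R}^d$ there exists a global minimizer $x\in\overline{\mathcal{B}}_\omega$, i.e. a Birkhoff global minimizer with rotation vector $\omega$ such that $\tau_{k,l}x=x$ for all $(k,l)\in\mathbb{Z}^d\times\mathbb{Z}$ with $\langle\omega,k\rangle+l=0$.
   Context: Notation: $\|i\|=\sum_{k=1}^d|i_k|$, $B_j^r=\{k:\|k-j\|\le r\}$, $(\tau_{k,l}x)_i=x_{i+k}+l$. Local potentials $S_j:\mathbb{R}^{\mathbb{Z}^d}\to\mathbb{R}$, $j\in\mathbb{Z}^d$, satisfy: (A) there is $r\in(0,\infty)$ and $C^2$ functions $s_j:\mathbb{R}^{B_j^r}\to\mathbb{R}$ with $S_j(x)=s_j(x|_{B_j^r})$; (B) $S_j(\tau_{k,l}x)=S_{j+k}(x)$; (C) each $S_j$ is bounded below and $S_j(x)\to\infty$ as $|x_k-x_j|\to\infty$ whenever $\|k-j\|=1$; (D) $\partial_{i,k}S_j\le0$ for $i\ne k$, and $\partial_{i,k}S_i<0$ when $\|i-k\|=1$; (E) $|\partial_{i,k}S_j|\le C$ uniformly. A configuration $x$ is Birkhoff if for every $(k,l)$, $\tau_{k,l}x\ge x$ or $\tau_{k,l}x\le x$ (pointwise order). $\omega$ is the rotation vector of $x$ if $\lim_{n\to\infty}x_{ni}/n=\langle\omega,i\rangle$ for all $i$. $\overline{\mathcal{B}}_\omega$ is the set of Birkhoff configurations with rotation vector $\omega$ satisfying $\tau_{k,l}x=x$ whenever $\langle\omega,k\rangle+l=0$.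 For finite $B$: $W_B=\sum_{j\in B}S_j$, $\mathring{B}^{(r)}=\{i\in B:B_i^r\subset B\}$; $x$ is a global minimizer if $W_B(x+y)\ge W_B(x)$ for all finite $B$ and all $y$ supported in $\mathring{B}^{(r)}$. *)

From Stdlib Require Import Reals Lra ZArith List Classical ClassicalEpsilon.
From Stdlib Require Fin.
Open Scope R_scope.

Definition site (d : nat) := Fin.t d -> Z.
Definition config (d : nat) := site d -> R.

Fixpoint sumFin (d : nat) : (Fin.t d -> R) -> R :=
  match d with
  | O => fun _ => 0
  | S n => fun f => f Fin.F1 + sumFin n (fun a => f (Fin.FS a))
  end.

Definition site_add {d} (i k : site d) : site d := fun a => (i a + k a)%Z.
Definition site_sub {d} (i k : site d) : site d := fun a => (i a - k a)%Z.
Definition site_scale {d} (n : nat) (i : site d) : site d :=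
  fun a => (Z.of_nat n * i a)%Z.

Definition norm1 {d} (i : site d) : R := sumFin d (fun a => IZR (Z.abs (i a))).

Definition inner {d} (omega : Fin.t d -> R) (k : site d) : R :=
  sumFin d (fun a => omega a * IZR (k a)).

Definition tau {d} (k : site d) (l : Z) (x : config d) : config d :=
  fun i => x (site_add i k) + IZR l.

Definition cfg_le {d} (x y : config d) : Prop := forall i, x i <= y i.

Definition upd {d} (x : config d) (i : site d) (t : R) : config d :=
  fun k => if excluded_middle_informative (k = i) then t else x k.

Definition has_partial {d} (i : site d) (F G : config d -> R) : Prop :=
  forall x, derivable_pt_lim (fun t => F (upd x i t)) (x i) (G x).

(* continuity w.r.t. the sup distance (for local functions this is ordinary
   continuity in the finitely many relevant variables) *)
Definition cfg_continuous {d} (F : config d -> R) : Prop :=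
  forall x eps, 0 < eps -> exists delta, 0 < delta /\
    forall y, (forall i, Rabs (y i - x i) < delta) -> Rabs (F y - F x) < eps.

Definition Birkhoff {d} (x : config d) : Prop :=
  forall k l, cfg_le x (tau k l x) \/ cfg_le (tau k l x) x.

Definition rotation_vector {d} (x : config d) (omega : Fin.t d -> R) : Prop :=
  forall i, Un_cv (fun n => x (site_scale n i) / INR n) (inner omega i).

Definition Bbar {d} (omega : Fin.t d -> R) (x : config d) : Prop :=
  Birkhoff x /\ rotation_vector x omega /\
  (forall k l, inner omega k + IZR l = 0 -> tau k l x = x).

(* W_B for a finite set B, given as a duplicate-free list *)
Definition W {d} (S : site d -> config d -> R) (B : list (site d)) (x : config d) : R :=
  fold_right (fun j acc => S j x + acc) 0 B.

Definition cfg_add {d} (x y : config d) : config d := fun i => x i + y i.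

Definition supported_in_interior {d} (r : R) (B : list (site d)) (y : config d) : Prop :=
  forall i, y i <> 0 -> In i B /\ (forall k, norm1 (site_sub k i) <= r -> In k B).

Definition global_minimizer {d} (S : site d -> config d -> R) (r : R) (x : config d) : Prop :=
  forall (B : list (site d)) (y : config d), NoDup B ->
    supported_in_interior r B y -> W S B x <= W S B (cfg_add x y).

From Stdlib Require Import Reals ZArith List Lra Lia Classical ClassicalEpsilon FunctionalExtensionality Permutation Cantor.
From Stdlib Require Fin.
Open Scope R_scope.

(* Existence of Birkhoff global minimizers with prescribed rotation vector
   (Aubry-Mather theory for configurations x : Z^d -> R).
   1. Rational rotation vectors w = P/Q.  Minimize the energy of one period box
      over the (Q,P)-periodic configurations, x(i + Q e_a) = x(i) + P_a; a
      minimizer exists by coercivity (C), translation invariance (B) and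
      compactness.  By the sign condition (D) on the mixed derivatives every
      potential is submodular, so the minimizers form a lattice that is stable
      under the translations tau; the infimum of the translates of nonnegative
      height <w,k> + l of a minimizer is again a minimizer, and it is ordered
      with respect to w.  Periodic minimizers are global minimizers: a finitely
      supported perturbation is periodized with a large multiple NQ of the
      period, and a (Q,P)-minimizer also minimizes the (NQ,NP)-problem.
   2. Arbitrary w.  Approximate w by rational vectors, normalize the ordered
      minimizers at the origin and extract a pointwise convergent subsequence
      (diagonal argument).  The limit is a Birkhoff global minimizer within
      distance 1 of the plane of slope w; the infimum of its translates of
      nonnegative height, taken among the global minimizers comparable with all
      its translates, is ordered with respect to w, hence lies in Bbar w. *)

Definition orig {d} : site d := fun _ => 0%Z.

Lemma site_ext {d} (i j : site d) : (forall a, i a = j a) -> i = j.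
Proof. intro H; apply functional_extensionality; exact H. Qed.

Lemma cfg_ext {d} (x y : config d) : (forall i, x i = y i) -> x = y.
Proof. intro H; apply functional_extensionality; exact H. Qed.

Lemma site_add_assoc {d} (i j k : site d) :
  site_add (site_add i j) k = site_add i (site_add j k).
Proof. apply site_ext; intro a; unfold site_add; lia. Qed.

Lemma site_add_comm {d} (i j : site d) : site_add i j = site_add j i.
Proof. apply site_ext; intro a; unfold site_add; lia. Qed.

Lemma site_add_0r {d} (i : site d) : site_add i orig = i.
Proof. apply site_ext; intro a; unfold site_add, orig; lia. Qed.

Lemma site_add_0l {d} (i : site d) : site_add orig i = i.
Proof. apply site_ext; intro a; unfold site_add, orig; lia. Qed.

Lemma site_add_sub {d} (i k : site d) : site_add (site_sub i k) k = i.
Proof. apply site_ext; intro a; unfold site_add, site_sub; lia. Qed.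

Lemma site_sub_add {d} (i k : site d) : site_sub (site_add i k) k = i.
Proof. apply site_ext; intro a; unfold site_add, site_sub; lia. Qed.

Lemma tau_tau {d} (k k' : site d) (l l' : Z) (x : config d) :
  tau k l (tau k' l' x) = tau (site_add k k') (l' + l) x.
Proof.
  apply cfg_ext; intro i; unfold tau. rewrite site_add_assoc, plus_IZR. ring.
Qed.

Lemma tau00 {d} (x : config d) : tau orig 0 x = x.
Proof. apply cfg_ext; intro i; unfold tau; rewrite site_add_0r; simpl; ring. Qed.

Lemma tau_comm {d} (k k' : site d) (l l' : Z) (x : config d) :
  tau k l (tau k' l' x) = tau k' l' (tau k l x).
Proof. rewrite !tau_tau, site_add_comm, Z.add_comm; reflexivity. Qed.

Lemma tau_mono {d} (k : site d) l (x y : config d) : cfg_le x y -> cfg_le (tau k l x) (tau k l y).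
Proof. unfold cfg_le, tau; intros H i; specialize (H (site_add i k)); lra. Qed.

Lemma sumFin_ext d (f g : Fin.t d -> R) : (forall a, f a = g a) -> sumFin d f = sumFin d g.
Proof.
  induction d; simpl; intros H; auto.
  rewrite H; f_equal; apply IHd; intros; apply H.
Qed.

Lemma sumFin_plus d (f g : Fin.t d -> R) : sumFin d (fun a => f a + g a) = sumFin d f + sumFin d g.
Proof. induction d; simpl; [ring|]. rewrite IHd; ring. Qed.

Lemma sumFin_scal d c (f : Fin.t d -> R) : sumFin d (fun a => c * f a) = c * sumFin d f.
Proof. induction d; simpl; [ring|]. rewrite IHd; ring. Qed.

Lemma sumFin_opp d (f : Fin.t d -> R) : sumFin d (fun a => - f a) = - sumFin d f.
Proof. induction d; simpl; [ring|]. rewrite IHd; ring. Qed.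

Lemma sumFin_zero d : sumFin d (fun _ => 0) = 0.
Proof. induction d; simpl; [ring|]. rewrite IHd; ring. Qed.

Lemma sumFin_le d (f g : Fin.t d -> R) : (forall a, f a <= g a) -> sumFin d f <= sumFin d g.
Proof.
  induction d; simpl; intros H; [lra|].
  specialize (IHd (fun a => f (Fin.FS a)) (fun a => g (Fin.FS a)) (fun a => H (Fin.FS a))).
  specialize (H Fin.F1); lra.
Qed.

Lemma sumFin_nonneg d (f : Fin.t d -> R) : (forall a, 0 <= f a) -> 0 <= sumFin d f.
Proof. intros H; rewrite <- (sumFin_zero d); apply sumFin_le; auto. Qed.

Lemma sumFin_term d (f : Fin.t d -> R) a : (forall b, 0 <= f b) -> f a <= sumFin d f.
Proof.
  induction a; simpl; intros H.
  - pose proof (sumFin_nonneg n (fun b => f (Fin.FS b)) (fun b => H (Fin.FS b))); lra.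
  - pose proof (IHa (fun b => f (Fin.FS b)) (fun b => H (Fin.FS b))). specialize (H Fin.F1); simpl in *; lra.
Qed.

Lemma sumFin_abs d (f : Fin.t d -> R) : Rabs (sumFin d f) <= sumFin d (fun a => Rabs (f a)).
Proof.
  induction d; simpl.
  - rewrite Rabs_R0; lra.
  - eapply Rle_trans; [apply Rabs_triang|]. specialize (IHd (fun a => f (Fin.FS a))); lra.
Qed.

Lemma sumFin_delta d (f : Fin.t d -> R) a : (forall b, b <> a -> f b = 0) -> sumFin d f = f a.
Proof.
  induction a; simpl; intros H.
  - rewrite (sumFin_ext _ _ (fun _ => 0)). rewrite sumFin_zero; ring.
    intros b; apply H; intro E; inversion E.
  - rewrite H by (intro E; inversion E).
    rewrite (IHa (fun b => f (Fin.FS b))). ring.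
    intros b Hb; apply H; intro E; apply Hb. apply Fin.FS_inj in E; auto.
Qed.

Definition axis {d} (a : Fin.t d) (z : Z) : site d := fun b => if Fin.eq_dec a b then z else 0%Z.

Lemma axis_eq {d} (a : Fin.t d) z : axis a z a = z.
Proof. unfold axis; destruct (Fin.eq_dec a a); congruence. Qed.

Lemma axis_neq {d} (a b : Fin.t d) z : b <> a -> axis a z b = 0%Z.
Proof. unfold axis; intros; destruct (Fin.eq_dec a b); congruence. Qed.

Lemma inner_add {d} (w : Fin.t d -> R) (k k' : site d) : inner w (site_add k k') = inner w k + inner w k'.
Proof.
  unfold inner, site_add. rewrite <- sumFin_plus. apply sumFin_ext; intro a; rewrite plus_IZR; ring.
Qed.

Lemma inner_sub {d} (w : Fin.t d -> R) (k k' : site d) : inner w (site_sub k k') = inner w k - inner w k'.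
Proof.
  unfold inner, site_sub. unfold Rminus. rewrite <- sumFin_opp, <- sumFin_plus.
  apply sumFin_ext; intro a; rewrite minus_IZR; ring.
Qed.

Lemma inner_s0 {d} (w : Fin.t d -> R) : inner w orig = 0.
Proof. unfold inner, orig. transitivity (sumFin d (fun _ => 0)); [|apply sumFin_zero]. apply sumFin_ext; intro a; cbn [IZR]; ring. Qed.

Lemma inner_axis {d} (w : Fin.t d -> R) a z : inner w (axis a z) = w a * IZR z.
Proof.
  unfold inner, axis. rewrite (sumFin_delta _ _ a).
  - destruct (Fin.eq_dec a a); [auto|congruence].
  - intros b Hb; destruct (Fin.eq_dec a b); [congruence|simpl; ring].
Qed.

Lemma inner_scale {d} (w : Fin.t d -> R) n (i : site d) : inner w (site_scale n i) = INR n * inner w i.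
Proof.
  unfold inner, site_scale. rewrite <- sumFin_scal. apply sumFin_ext; intro a.
  rewrite mult_IZR, <- INR_IZR_INZ; ring.
Qed.

Lemma norm1_coord {d} (i : site d) a : IZR (Z.abs (i a)) <= norm1 i.
Proof. unfold norm1. apply (sumFin_term d (fun a => IZR (Z.abs (i a)))). intros; apply IZR_le; lia. Qed.

Lemma norm1_sym {d} (i j : site d) : norm1 (site_sub i j) = norm1 (site_sub j i).
Proof. unfold norm1, site_sub. apply sumFin_ext; intro a; f_equal; lia. Qed.

Lemma norm1_axis {d} (a : Fin.t d) : norm1 (site_sub (axis a 1) orig) = 1.
Proof.
  unfold norm1. rewrite (sumFin_delta _ _ a).
  - unfold site_sub, orig; rewrite axis_eq; simpl; auto.
  - intros b Hb; unfold site_sub, orig; rewrite axis_neq; auto.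
Qed.

Lemma upd_eq {d} (x : config d) i t : upd x i t i = t.
Proof. unfold upd; destruct (excluded_middle_informative (i = i)); congruence. Qed.

Lemma upd_neq {d} (x : config d) i t k : k <> i -> upd x i t k = x k.
Proof. unfold upd; intros; destruct (excluded_middle_informative (k = i)); congruence. Qed.

Lemma upd_same {d} (x : config d) i : upd x i (x i) = x.
Proof. apply cfg_ext; intro k; unfold upd; destruct (excluded_middle_informative (k = i)); congruence. Qed.

Lemma upd_upd {d} (x : config d) i s t : upd (upd x i s) i t = upd x i t.
Proof. apply cfg_ext; intro k; unfold upd; destruct (excluded_middle_informative (k = i)); congruence. Qed.

Lemma upd_comm {d} (x : config d) i k s t : i <> k -> upd (upd x i s) k t = upd (upd x k t) i s.
Proof.
  intro H; apply cfg_ext; intro m; unfold upd.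
  destruct (excluded_middle_informative (m = k)); destruct (excluded_middle_informative (m = i)); congruence.
Qed.

Definition floorZ (x : R) : Z := (up x - 1)%Z.

Lemma floorZ_spec x : IZR (floorZ x) <= x < IZR (floorZ x) + 1.
Proof. unfold floorZ; destruct (archimed x); rewrite minus_IZR; simpl; lra. Qed.

Definition cfg_min {d} (x y : config d) : config d := fun i => Rmin (x i) (y i).

Definition cfg_max {d} (x y : config d) : config d := fun i => Rmax (x i) (y i).

(* Sums over finite lists of sites.  A sum only depends on the support of its
   summand, which is how the energy difference of a perturbation localizes. *)
Definition lsum {d} (f : site d -> R) (L : list (site d)) : R := fold_right (fun j acc => f j + acc) 0 L.

Lemma W_lsum {d} S (B : list (site d)) x : W S B x = lsum (fun j => S j x) B.
Proof. reflexivity. Qed.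

Lemma lsum_app {d} (f : site d -> R) L1 L2 : lsum f (L1 ++ L2) = lsum f L1 + lsum f L2.
Proof. induction L1; simpl; [ring|]. rewrite IHL1; ring. Qed.

Lemma lsum_plus {d} (f g : site d -> R) L : lsum (fun j => f j + g j) L = lsum f L + lsum g L.
Proof. induction L; simpl; [ring|]. rewrite IHL; ring. Qed.

Lemma lsum_minus {d} (f g : site d -> R) L : lsum (fun j => f j - g j) L = lsum f L - lsum g L.
Proof. induction L; simpl; [ring|]. rewrite IHL; ring. Qed.

Lemma lsum_ext {d} (f g : site d -> R) L : (forall j, In j L -> f j = g j) -> lsum f L = lsum g L.
Proof. induction L; simpl; intros H; auto. rewrite H, IHL; auto. Qed.

Lemma lsum_le {d} (f g : site d -> R) L : (forall j, In j L -> f j <= g j) -> lsum f L <= lsum g L.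
Proof. induction L; simpl; intros H; [lra|]. pose proof (H a (or_introl eq_refl)). pose proof (IHL (fun j h => H j (or_intror h))). lra. Qed.

Lemma lsum_const {d} c (L : list (site d)) : lsum (fun _ => c) L = INR (length L) * c.
Proof. induction L; simpl length; [simpl; ring|]. rewrite S_INR; simpl lsum; rewrite IHL; ring. Qed.

Lemma lsum_nonneg {d} (f : site d -> R) L : (forall j, In j L -> 0 <= f j) -> 0 <= lsum f L.
Proof. intros H. replace 0 with (lsum (fun _ : site d => 0) L). apply lsum_le; auto.
  rewrite lsum_const; ring. Qed.

Lemma lsum_term {d} (f : site d -> R) L j : (forall j, In j L -> 0 <= f j) -> In j L -> f j <= lsum f L.
Proof.
  induction L; simpl; intros H Hj; [contradiction|].
  destruct Hj as [<-|Hj].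
  - pose proof (lsum_nonneg f L (fun j h => H j (or_intror h))); lra.
  - pose proof (IHL (fun j h => H j (or_intror h)) Hj). pose proof (H a (or_introl eq_refl)); lra.
Qed.

Lemma lsum_perm {d} (f : site d -> R) L1 L2 : Permutation L1 L2 -> lsum f L1 = lsum f L2.
Proof. induction 1; simpl; try lra. Qed.

Definition inb {d} (B : list (site d)) (j : site d) : bool :=
  if excluded_middle_informative (In j B) then true else false.

Lemma lsum_filter {d} (f : site d -> R) A B :
  (forall j, ~ In j B -> f j = 0) -> lsum f A = lsum f (filter (inb B) A).
Proof.
  intros H; induction A; simpl; auto.
  unfold inb at 1; destruct (excluded_middle_informative (In a B)); simpl; rewrite IHA; auto.
  rewrite H; auto; ring.
Qed.

Lemma lsum_sub {d} (f : site d -> R) A B :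
  NoDup A -> NoDup B -> (forall j, In j B -> In j A) -> (forall j, ~ In j B -> f j = 0) ->
  lsum f A = lsum f B.
Proof.
  intros HA HB Hsub Hz. rewrite (lsum_filter f A B Hz). apply lsum_perm.
  apply NoDup_Permutation; auto.
  - apply NoDup_filter; auto.
  - intro j; rewrite filter_In; unfold inb; split.
    + intros [_ H]; destruct (excluded_middle_informative (In j B)); auto; discriminate.
    + intros Hj; split; auto; destruct (excluded_middle_informative (In j B)); auto.
Qed.

Lemma lsum_map {n m} (f : site m -> R) (g : site n -> site m) L :
  lsum f (map g L) = lsum (fun j => f (g j)) L.
Proof. induction L; simpl; auto. rewrite IHL; auto. Qed.

Definition scons {n} (z : Z) (j : site n) : site (S n) := fun a => Fin.caseS' a (fun _ => Z) z j.

Definition stail {n} (j : site (S n)) : site n := fun a => j (Fin.FS a).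

Definition site_nil : site 0 := fun a => Fin.case0 (fun _ => Z) a.

Lemma site_nil_uniq (j : site 0) : j = site_nil.
Proof. apply site_ext; intro a; inversion a. Qed.

Lemma scons_eta {n} (j : site (S n)) : scons (j Fin.F1) (stail j) = j.
Proof. apply site_ext; intro a; pattern a; apply Fin.caseS'; reflexivity. Qed.

Lemma scons_inj {n} z z' (j j' : site n) : scons z j = scons z' j' -> z = z' /\ j = j'.
Proof.
  intro H; split.
  - exact (f_equal (fun s => s Fin.F1) H).
  - apply site_ext; intro a; exact (f_equal (fun s => s (Fin.FS a)) H).
Qed.

Lemma scons_add {n} z z' (j j' : site n) : site_add (scons z j) (scons z' j') = scons (z + z') (site_add j j').
Proof. apply site_ext; intro a; pattern a; apply Fin.caseS'; reflexivity. Qed.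

Lemma axis_F1 {n} z : @axis (S n) Fin.F1 z = scons z orig.
Proof.
  apply site_ext; intro a; pattern a; apply Fin.caseS'; unfold axis.
  - destruct (Fin.eq_dec Fin.F1 Fin.F1); [reflexivity|congruence].
  - intro p; destruct (Fin.eq_dec Fin.F1 (Fin.FS p)); [inversion e|reflexivity].
Qed.

Lemma axis_FS {n} (a : Fin.t n) z : @axis (S n) (Fin.FS a) z = scons 0 (axis a z).
Proof.
  apply site_ext; intro b; pattern b; apply Fin.caseS'; unfold axis.
  - destruct (Fin.eq_dec (Fin.FS a) Fin.F1); [inversion e|reflexivity].
  - intro p; unfold scons; simpl.
    destruct (Fin.eq_dec (Fin.FS a) (Fin.FS p)); destruct (Fin.eq_dec a p); auto.
    all: first [apply Fin.FS_inj in e; contradiction | subst; congruence].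
Qed.

Definition seqZ (c : Z) (Q : nat) : list Z := map (fun t => (c + Z.of_nat t)%Z) (seq 0 Q).

Lemma In_seqZ c Q t : In t (seqZ c Q) <-> (c <= t < c + Z.of_nat Q)%Z.
Proof.
  unfold seqZ; rewrite in_map_iff; split.
  - intros [u [<- Hu]]; apply in_seq in Hu; lia.
  - intros H; exists (Z.to_nat (t - c)); split; [lia|]. apply in_seq; lia.
Qed.

Lemma NoDup_seqZ c Q : NoDup (seqZ c Q).
Proof. unfold seqZ; apply FinFun.Injective_map_NoDup; [intros x y; lia| apply seq_NoDup]. Qed.

Fixpoint boxlist (d : nat) : site d -> nat -> list (site d) :=
  match d return site d -> nat -> list (site d) with
  | O => fun _ _ => site_nil :: nil
  | S n => fun c Q => flat_map (fun t => map (scons t) (boxlist n (stail c) Q)) (seqZ (c Fin.F1) Q)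
  end.

Lemma In_boxlist d c Q j : In j (boxlist d c Q) <-> forall a, (c a <= j a < c a + Z.of_nat Q)%Z.
Proof.
  revert c j; induction d; intros c j; simpl.
  - split; [intros _ a; inversion a| intros _; left; symmetry; apply site_nil_uniq].
  - rewrite in_flat_map. split.
    + intros [t [Ht Hj]]. rewrite in_map_iff in Hj. destruct Hj as [j' [<- Hj']].
      rewrite IHd in Hj'. rewrite In_seqZ in Ht.
      intro a; pattern a; apply Fin.caseS'; [exact Ht|]. intro p; apply (Hj' p).
    + intros H. exists (j Fin.F1); split; [apply In_seqZ, H|].
      apply in_map_iff; exists (stail j); split; [apply scons_eta|].
      rewrite IHd; intro a; apply (H (Fin.FS a)).
Qed.

Lemma NoDup_flat_map_disjoint {A B} (f : A -> list B) (l : list A) :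
  NoDup l -> (forall x, NoDup (f x)) -> (forall x y z, x <> y -> In z (f x) -> In z (f y) -> False) ->
  NoDup (flat_map f l).
Proof.
  induction l; simpl; intros Hl Hf Hd; [constructor|].
  inversion Hl; subst. apply NoDup_app; auto.
  intros z Hz Hz'. apply in_flat_map in Hz'. destruct Hz' as [y [Hy Hz2]].
  apply (Hd a y z); auto. intro; subst; contradiction.
Qed.

Lemma NoDup_boxlist d c Q : NoDup (boxlist d c Q).
Proof.
  revert c; induction d; intros c; simpl.
  - constructor; [simpl; auto| constructor].
  - apply NoDup_flat_map_disjoint.
    + apply NoDup_seqZ.
    + intro t; apply FinFun.Injective_map_NoDup; [|apply IHd].
      intros x y H; apply scons_inj in H; tauto.
    + intros x y z Hxy H1 H2. rewrite in_map_iff in H1, H2.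
      destruct H1 as [u [<- _]]. destruct H2 as [v [E _]]. apply scons_inj in E. destruct E; congruence.
Qed.

Lemma list_coord_bound {d} (B : list (site d)) : exists K : nat, forall j a, In j B -> (Z.abs (j a) < Z.of_nat K)%Z.
Proof.
  induction B as [|b B [K HK]].
  - exists 0%nat; intros j a [].
  - exists (Nat.max (Z.to_nat (up (norm1 b))) K). intros j a [<-|Hj].
    + pose proof (norm1_coord b a). destruct (archimed (norm1 b)) as [H1 _].
      assert (Z.abs (b a) < up (norm1 b))%Z by (apply lt_IZR; lra). lia.
    + specialize (HK j a Hj). lia.
Qed.

Definition boxsum d (c : site d) Q (f : site d -> R) := lsum f (boxlist d c Q).

Definition zsum (g : Z -> R) (L : list Z) : R := fold_right (fun t acc => g t + acc) 0 L.

Lemma lsum_flat_map {n} (f : site (S n) -> R) (h : Z -> list (site (S n))) L :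
  lsum f (flat_map h L) = zsum (fun t => lsum f (h t)) L.
Proof. induction L; simpl; auto. rewrite lsum_app, IHL; auto. Qed.

Lemma boxsum_S n c Q (f : site (S n) -> R) :
  boxsum (S n) c Q f = zsum (fun t => boxsum n (stail c) Q (fun j => f (scons t j))) (seqZ (c Fin.F1) Q).
Proof. unfold boxsum; simpl. rewrite lsum_flat_map. f_equal. apply functional_extensionality; intro t.
  apply lsum_map. Qed.

Lemma boxsum_0 c Q (f : site 0 -> R) : boxsum 0 c Q f = f site_nil.
Proof. unfold boxsum; simpl; ring. Qed.

Lemma boxsum_ext d c Q (f g : site d -> R) : (forall j, In j (boxlist d c Q) -> f j = g j) -> boxsum d c Q f = boxsum d c Q g.
Proof. apply lsum_ext. Qed.

Lemma zsum_ext g h L : (forall t, g t = h t) -> zsum g L = zsum h L.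
Proof. intros H; induction L; simpl; auto; rewrite H, IHL; auto. Qed.

Lemma zsum_scal c g L : zsum (fun t => c * g t) L = c * zsum g L.
Proof. induction L; simpl; [ring|]; rewrite IHL; ring. Qed.

Lemma zsum_app g L1 L2 : zsum g (L1 ++ L2) = zsum g L1 + zsum g L2.
Proof. induction L1; simpl; [ring|]; rewrite IHL1; ring. Qed.

Lemma map_seq_shift {A} (f : nat -> A) s B : map f (seq s B) = map (fun t => f (s + t)%nat) (seq 0 B).
Proof.
  revert f s; induction B; intros f s; simpl; auto. rewrite Nat.add_0_r. f_equal.
  rewrite IHB, (IHB _ 1%nat). apply map_ext; intro t; f_equal; lia.
Qed.

Lemma seqZ_add c A B : seqZ c (A + B) = seqZ c A ++ seqZ (c + Z.of_nat A) B.
Proof.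
  unfold seqZ. rewrite seq_app, map_app. f_equal. simpl.
  rewrite map_seq_shift. apply map_ext; intro t; lia.
Qed.

Lemma seqZ_S c Q : seqZ c (S Q) = c :: seqZ (c + 1) Q.
Proof.
  replace (S Q) with (1 + Q)%nat by lia. rewrite seqZ_add. simpl. f_equal; try lia.
Qed.

Lemma seqZ_Sr c Q : seqZ c (S Q) = seqZ c Q ++ ((c + Z.of_nat Q)%Z :: nil).
Proof.
  replace (S Q) with (Q + 1)%nat by lia. rewrite seqZ_add. f_equal. unfold seqZ; simpl; f_equal; lia.
Qed.

Definition zper (Q : nat) (g : Z -> R) := forall t, g (t + Z.of_nat Q)%Z = g t.

Lemma zsum_shift1 Q g c : zper Q g -> zsum g (seqZ (c + 1) Q) = zsum g (seqZ c Q).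
Proof.
  intros H. pose proof (f_equal (zsum g) (seqZ_S c Q)) as E1.
  pose proof (f_equal (zsum g) (seqZ_Sr c Q)) as E2.
  rewrite zsum_app in E2. simpl in E1, E2. rewrite H in E2. lra.
Qed.

Lemma zsum_shift Q g c : zper Q g -> zsum g (seqZ c Q) = zsum g (seqZ 0 Q).
Proof.
  intros H.
  assert (Hn : forall (n : nat) c0, zsum g (seqZ (c0 + Z.of_nat n) Q) = zsum g (seqZ c0 Q)).
  { induction n; intros c0. - f_equal; f_equal; lia.
    - rewrite Nat2Z.inj_succ. replace (c0 + Z.succ (Z.of_nat n))%Z with ((c0 + Z.of_nat n) + 1)%Z by lia.
      rewrite zsum_shift1; auto. }
  destruct (Z_le_gt_dec 0 c).
  - replace c with (0 + Z.of_nat (Z.to_nat c))%Z by lia. apply Hn.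
  - rewrite <- (Hn (Z.to_nat (- c)) c). f_equal; f_equal; lia.
Qed.

Lemma zsum_reindex g c k Q : zsum (fun t => g (t + k)%Z) (seqZ c Q) = zsum g (seqZ (c + k) Q).
Proof.
  unfold seqZ. induction (seq 0 Q); simpl; auto. rewrite IHl. replace (c + Z.of_nat a + k)%Z with (c + k + Z.of_nat a)%Z by lia; reflexivity.
Qed.

Lemma zsum_decomp Q g N : zper Q g -> zsum g (seqZ 0 (N * Q)) = INR N * zsum g (seqZ 0 Q).
Proof.
  intros H. induction N.
  - simpl; unfold seqZ; simpl; ring.
  - rewrite Nat.mul_succ_l, seqZ_add, zsum_app, IHN.
    rewrite (zsum_shift Q g (0 + Z.of_nat (N * Q))); auto. rewrite S_INR; ring.
Qed.

Definition periodic {d} (Q : nat) (f : site d -> R) :=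
  forall a j, f (site_add j (axis a (Z.of_nat Q))) = f j.

Lemma scons_add_F1 {n} t (j : site n) z : site_add (scons t j) (axis Fin.F1 z) = scons (t + z) j.
Proof. rewrite axis_F1, scons_add, site_add_0r; auto. Qed.

Lemma scons_add_FS {n} t (j : site n) a z : site_add (scons t j) (axis (Fin.FS a) z) = scons t (site_add j (axis a z)).
Proof. rewrite axis_FS, scons_add, Z.add_0_r; auto. Qed.

Lemma boxsum_shift d Q (f : site d -> R) c : periodic Q f -> boxsum d c Q f = boxsum d orig Q f.
Proof.
  revert c; induction d; intros c Hf.
  - rewrite !boxsum_0; auto.
  - rewrite !boxsum_S.
    assert (Hin : forall t cc, boxsum d cc Q (fun j => f (scons t j)) = boxsum d orig Q (fun j => f (scons t j))).
    { intros t cc; apply IHd. intros a j; rewrite <- scons_add_FS; apply Hf. }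
    assert (Hz : zper Q (fun t => boxsum d orig Q (fun j => f (scons t j)))).
    { intro t. unfold boxsum; apply lsum_ext; intros j _. rewrite <- scons_add_F1; apply Hf. }
    transitivity (zsum (fun t => boxsum d orig Q (fun j => f (scons t j))) (seqZ (c Fin.F1) Q)).
    { apply zsum_ext; intro; apply Hin. }
    transitivity (zsum (fun t => boxsum d orig Q (fun j => f (scons t j))) (seqZ (@orig (S d) Fin.F1) Q)).
    2:{ apply zsum_ext; intro; symmetry; apply Hin. }
    rewrite (zsum_shift Q _ (c Fin.F1)); auto.
Qed.

Lemma boxsum_reindex d Q (f : site d -> R) c k :
  boxsum d c Q (fun j => f (site_add j k)) = boxsum d (site_add c k) Q f.
Proof.
  revert c k f; induction d; intros c k f.
  - rewrite !boxsum_0. f_equal. apply site_nil_uniq.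
  - rewrite !boxsum_S.
    rewrite (zsum_ext _ (fun t => boxsum d (site_add (stail c) (stail k)) Q (fun j => f (scons (t + k Fin.F1) j)))).
    + rewrite (zsum_reindex (fun t => boxsum d (site_add (stail c) (stail k)) Q (fun j => f (scons t j)))). reflexivity.
    + intro t. rewrite <- IHd. unfold boxsum; apply lsum_ext; intros j _. f_equal.
      rewrite <- (scons_eta k) at 1. rewrite scons_add. reflexivity.
Qed.

Lemma boxsum_decomp d Q N (f : site d -> R) :
  periodic Q f -> boxsum d orig (N * Q) f = INR N ^ d * boxsum d orig Q f.
Proof.
  revert f; induction d; intros f Hf.
  - rewrite !boxsum_0; simpl; ring.
  - rewrite !boxsum_S.
    rewrite (zsum_ext _ (fun t => INR N ^ d * boxsum d orig Q (fun j => f (scons t j)))).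
    + rewrite zsum_scal. change (stail (@orig (S d))) with (@orig d). change (@orig (S d) Fin.F1) with 0%Z.
      rewrite zsum_decomp. simpl; ring.
      intro t. unfold boxsum; apply lsum_ext; intros j _. rewrite <- scons_add_F1; apply Hf.
    + intro t. apply IHd. intros a j; rewrite <- scons_add_FS; apply Hf.
Qed.

Definition zenum (m : nat) : Z := let '(a, b) := Cantor.of_nat m in (Z.of_nat a - Z.of_nat b)%Z.

Lemma zenum_surj z : exists m, zenum m = z.
Proof.
  destruct (Z_le_gt_dec 0 z).
  - exists (Cantor.to_nat (Z.to_nat z, 0%nat)). unfold zenum; rewrite Cantor.cancel_of_to; lia.
  - exists (Cantor.to_nat (0%nat, Z.to_nat (- z))). unfold zenum; rewrite Cantor.cancel_of_to; lia.
Qed.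

Fixpoint senum (d : nat) : nat -> site d :=
  match d return nat -> site d with
  | O => fun _ => site_nil
  | S n => fun m => let '(a, b) := Cantor.of_nat m in scons (zenum a) (senum n b)
  end.

Lemma senum_surj d (j : site d) : exists m, senum d m = j.
Proof.
  revert j; induction d; intros j.
  - exists 0%nat; simpl; symmetry; apply site_nil_uniq.
  - destruct (IHd (stail j)) as [b Hb]. destruct (zenum_surj (j Fin.F1)) as [a Ha].
    exists (Cantor.to_nat (a, b)). cbn [senum]. rewrite Cantor.cancel_of_to, Ha, Hb. apply scons_eta.
Qed.

Definition penum d (m : nat) : site d * Z := let '(a, b) := Cantor.of_nat m in (senum d a, zenum b).

Lemma penum_surj d (k : site d) (l : Z) : exists m, penum d m = (k, l).
Proof.
  destruct (senum_surj d k) as [a Ha]. destruct (zenum_surj l) as [b Hb].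
  exists (Cantor.to_nat (a, b)). unfold penum; rewrite Cantor.cancel_of_to, Ha, Hb; auto.
Qed.

Fixpoint sumFinN (d : nat) : (Fin.t d -> nat) -> nat :=
  match d with
  | O => fun _ => 0%nat
  | S n => fun f => (f Fin.F1 + sumFinN n (fun a => f (Fin.FS a)))%nat
  end.

Lemma sumFinN_zero d (f : Fin.t d -> nat) : sumFinN d f = 0%nat -> forall a, f a = 0%nat.
Proof.
  intros H a; induction a; simpl in H; [lia|]. apply (IHa (fun b => f (Fin.FS b))); lia.
Qed.

Lemma sumFinN_nz d (f : Fin.t d -> nat) : sumFinN d f <> 0%nat -> exists a, f a <> 0%nat.
Proof.
  induction d; simpl; intros H; [lia|].
  destruct (Nat.eq_dec (f Fin.F1) 0) as [E|E]; [|exists Fin.F1; auto].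
  destruct (IHd (fun a => f (Fin.FS a))) as [a Ha]; [lia|]. exists (Fin.FS a); auto.
Qed.

Lemma sumFinN_ext d (f g : Fin.t d -> nat) : (forall a, f a = g a) -> sumFinN d f = sumFinN d g.
Proof. induction d; simpl; intros H; [reflexivity|]. f_equal; [apply H|apply IHd; intros; apply H]. Qed.

Lemma sumFinN_upd d (f g : Fin.t d -> nat) a :
  (forall b, b <> a -> f b = g b) -> (sumFinN d f + g a = sumFinN d g + f a)%nat.
Proof.
  induction a; simpl; intros H.
  - rewrite (sumFinN_ext _ _ (fun b => g (Fin.FS b))). lia.
    intros b; apply H; intro E; inversion E.
  - rewrite (H Fin.F1) by (intro E; inversion E).
    assert (X : (sumFinN _ (fun b => f (Fin.FS b)) + g (Fin.FS a) =
                 sumFinN _ (fun b => g (Fin.FS b)) + f (Fin.FS a))%nat).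
    { apply (IHa (fun b => f (Fin.FS b)) (fun b => g (Fin.FS b))).
      intros b Hb; apply H; intro E; apply Hb; apply Fin.FS_inj in E; auto. }
    lia.
Qed.

Definition absN {d} (m : site d) : nat := sumFinN d (fun a => Z.abs_nat (m a)).

Lemma absN_update {d} (m m' : site d) a :
  (forall b, b <> a -> m' b = m b) -> (Z.abs (m' a) < Z.abs (m a))%Z -> (absN m' < absN m)%nat.
Proof.
  intros Hb Ha.
  pose proof (sumFinN_upd d (fun b => Z.abs_nat (m' b)) (fun b => Z.abs_nat (m b)) a
                (fun b H => f_equal Z.abs_nat (Hb b H))) as X.
  unfold absN. cbv beta in X. lia.
Qed.

Lemma site_ind {d} (P : site d -> Prop) :
  P orig -> (forall m a, P m -> P (site_add m (axis a 1))) -> (forall m a, P m -> P (site_sub m (axis a 1))) ->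
  forall m, P m.
Proof.
  intros H0 Hp Hm m. remember (absN m) as n. revert m Heqn.
  induction n as [n IH] using (well_founded_induction lt_wf). intros m Hn.
  destruct (Nat.eq_dec n 0) as [E|E].
  - subst. assert (m = orig). { apply site_ext; intro a. pose proof (sumFinN_zero _ _ E a). simpl in H. unfold orig; lia. }
    subst; auto.
  - subst. destruct (sumFinN_nz _ _ E) as [a Ha].
    destruct (Z_le_gt_dec (m a) 0) as [Hneg|Hpos].
    + set (m' := site_add m (axis a 1)).
      replace m with (site_sub m' (axis a 1)) by (unfold m'; apply site_sub_add).
      apply Hm, (IH (absN m')); auto. apply absN_update with a.
      * intros b Hb; unfold m', site_add; rewrite axis_neq; auto; lia.
      * unfold m', site_add; rewrite axis_eq; lia.
    + set (m' := site_sub m (axis a 1)).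
      replace m with (site_add m' (axis a 1)) by (unfold m'; apply site_add_sub).
      apply Hp, (IH (absN m')); auto. apply absN_update with a.
      * intros b Hb; unfold m', site_sub; rewrite axis_neq; auto; lia.
      * unfold m', site_sub; rewrite axis_eq; lia.
Qed.

Definition zscale {d} (Q : Z) (m : site d) : site d := fun a => (Q * m a)%Z.

Lemma periodic_mult {d} Q (f : site d -> R) :
  periodic Q f -> forall m j, f (site_add j (zscale (Z.of_nat Q) m)) = f j.
Proof.
  intros Hf m. pattern m; apply site_ind.
  - intro j; f_equal; apply site_ext; intro a; unfold site_add, zscale, orig; lia.
  - intros m' a IH j. rewrite <- (IH j), <- (Hf a (site_add j (zscale (Z.of_nat Q) m'))).
    f_equal; apply site_ext; intro b; unfold site_add, zscale, axis.
    destruct (Fin.eq_dec a b); lia.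
  - intros m' a IH j. rewrite <- (IH j), <- (Hf a (site_add j (zscale (Z.of_nat Q) (site_sub m' (axis a 1))))).
    f_equal; apply site_ext; intro b; unfold site_add, site_sub, zscale, axis.
    destruct (Fin.eq_dec a b); lia.
Qed.

Definition modrep {d} (Q : Z) (j : site d) : site d := fun a => Z.modulo (j a) Q.

Lemma periodic_modrep {d} Q (f : site d -> R) : (Q >= 1)%nat -> periodic Q f -> forall j, f j = f (modrep (Z.of_nat Q) j).
Proof.
  intros HQ Hf j. rewrite <- (periodic_mult Q f Hf (fun a => Z.div (j a) (Z.of_nat Q)) (modrep (Z.of_nat Q) j)).
  f_equal; apply site_ext; intro a; unfold site_add, zscale, modrep.
  assert (Z.of_nat Q <> 0%Z) by lia. pose proof (Z.div_mod (j a) (Z.of_nat Q) H). lia.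
Qed.

Lemma modrep_in {d} Q (j : site d) : (Q >= 1)%nat -> In (modrep (Z.of_nat Q) j) (boxlist d orig Q).
Proof.
  intros HQ. apply In_boxlist; intro a; unfold modrep, orig.
  pose proof (Z.mod_pos_bound (j a) (Z.of_nat Q)). lia.
Qed.

Lemma periodic_bounded {d} Q (f : site d -> R) : (Q >= 1)%nat -> periodic Q f -> exists C, forall j, Rabs (f j) <= C.
Proof.
  intros HQ Hf. exists (boxsum d orig Q (fun j => Rabs (f j))). intro j.
  rewrite (periodic_modrep Q f HQ Hf j). unfold boxsum. apply (lsum_term (fun j => Rabs (f j))).
  - intros; apply Rabs_pos.
  - apply modrep_in; auto.
Qed.

Lemma neighbour_bound_site_bound {d} (Rb : R) (m : site d) : exists B, forall v : config d,
  (forall j a, Rabs (v (site_add j (axis a 1%Z)) - v j) <= Rb) ->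
  forall j, Rabs (v (site_add j m) - v j) <= B.
Proof.
  pattern m; apply site_ind.
  - exists 0. intros v _ j; rewrite site_add_0r, Rminus_diag, Rabs_R0; lra.
  - intros k a [B HB0]. exists (B + Rb). intros v Hnb j.
    rewrite <- site_add_assoc.
    replace (v (site_add (site_add j k) (axis a 1)) - v j) with
      ((v (site_add (site_add j k) (axis a 1)) - v (site_add j k)) + (v (site_add j k) - v j)) by ring.
    eapply Rle_trans; [apply Rabs_triang|].
    pose proof (Hnb (site_add j k) a). specialize (HB0 v Hnb j). lra.
  - intros k a [B HB0]. exists (B + Rb). intros v Hnb j.
    set (u := site_add j (site_sub k (axis a 1))).
    assert (Eu : site_add u (axis a 1) = site_add j k).
    { unfold u. rewrite site_add_assoc, site_add_sub; auto. }
    replace (v u - v j) with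
      (- (v (site_add u (axis a 1)) - v u) + (v (site_add j k) - v j)) by (rewrite Eu; ring).
    eapply Rle_trans; [apply Rabs_triang|]. rewrite Rabs_Ropp.
    pose proof (Hnb u a). specialize (HB0 v Hnb j). lra.
Qed.

Definition incr (f : nat -> nat) := forall n, (f n < f (S n))%nat.

Lemma incr_lt f : incr f -> forall m n, (m < n)%nat -> (f m < f n)%nat.
Proof.
  intros H m n Hmn. induction Hmn. apply H. pose proof (H m0); lia.
Qed.

Lemma incr_ge f : incr f -> forall n, (n <= f n)%nat.
Proof. intros H n; induction n; [lia|]. pose proof (H n); lia. Qed.

Lemma incr_comp f g : incr f -> incr g -> incr (fun n => f (g n)).
Proof. intros Hf Hg n. apply incr_lt; auto. Qed.

Lemma Un_cv_sub (u : nat -> R) l f : incr f -> Un_cv u l -> Un_cv (fun n => u (f n)) l.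
Proof.
  intros Hf H eps He. destruct (H eps He) as [N HN]. exists N; intros n Hn.
  apply HN. pose proof (incr_ge f Hf n); lia.
Qed.

Lemma Un_cv_io (a b : nat -> R) la lb :
  Un_cv a la -> Un_cv b lb -> (forall N, exists n, (n >= N)%nat /\ a n <= b n) -> la <= lb.
Proof.
  intros Ha Hb H. destruct (Rle_dec la lb) as [|Hn]; auto. exfalso.
  set (e := (la - lb) / 2). assert (He : e > 0) by (unfold e; lra).
  destruct (Ha e He) as [N1 H1]. destruct (Hb e He) as [N2 H2].
  destruct (H (N1 + N2)%nat) as [n [Hn1 Hn2]].
  specialize (H1 n ltac:(lia)). specialize (H2 n ltac:(lia)). unfold R_dist in *.
  apply Rabs_def2 in H1. apply Rabs_def2 in H2. unfold e in *; lra.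
Qed.

Lemma Un_cv_le (a b : nat -> R) la lb : Un_cv a la -> Un_cv b lb -> (forall n, a n <= b n) -> la <= lb.
Proof. intros Ha Hb H. apply (Un_cv_io a b la lb Ha Hb). intros N; exists N; split; auto. Qed.

Lemma Un_cv_const c : Un_cv (fun _ => c) c.
Proof. intros eps He; exists 0%nat; intros; unfold R_dist; rewrite Rminus_diag, Rabs_R0; auto. Qed.

Lemma Un_cv_ext (a b : nat -> R) l : (forall n, a n = b n) -> Un_cv a l -> Un_cv b l.
Proof. intros E H eps He; destruct (H eps He) as [N HN]; exists N; intros n Hn; rewrite <- E; auto. Qed.

Lemma decreasing_limit_le (u : nat -> R) l n : (forall m, u (S m) <= u m) -> Un_cv u l -> l <= u n.
Proof.
  intros Hd Hc. apply (Un_cv_io u (fun _ => u n) l (u n) Hc (Un_cv_const _)).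
  intros N. exists (N + n)%nat; split; [lia|].
  assert (forall k, u (n + k)%nat <= u n). { induction k. rewrite Nat.add_0_r; lra. rewrite Nat.add_succ_r. specialize (Hd (n+k)%nat). lra. }
  replace (N + n)%nat with (n + N)%nat by lia. apply H.
Qed.

Lemma Rabs_le_inv a b : Rabs a <= b -> -b <= a <= b.
Proof. unfold Rabs; destruct Rcase_abs; lra. Qed.

Lemma inv_small eps : eps > 0 -> exists N, forall n, (n >= N)%nat -> / INR (S n) < eps.
Proof.
  intros He. destruct (archimed (/ eps)) as [Ha _].
  exists (Z.to_nat (up (/ eps))). intros n Hn.
  assert (INR (S n) > / eps).
  { assert (IZR (up (/ eps)) <= INR n).
    { destruct (Z_le_gt_dec 0 (up (/ eps))).
      - rewrite <- (Z2Nat.id (up (/eps))) by auto. rewrite <- INR_IZR_INZ. apply le_INR; lia.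
      - pose proof (pos_INR n). assert (up (/ eps) < 0)%Z as g' by lia. apply IZR_lt in g'. lra. }
    rewrite S_INR; lra. }
  replace eps with (/ / eps) by (field; lra).
  pose proof (Rinv_0_lt_compat eps He). apply Rinv_lt_contravar; [|lra]. apply Rmult_lt_0_compat; lra.
Qed.

Lemma bolzano_extract (u : nat -> R) M : (forall n, Rabs (u n) <= M) ->
  exists f, incr f /\ exists l, Un_cv (fun n => u (f n)) l.
Proof.
  intros Hb.
  destruct (Bolzano_Weierstrass u (fun c => -M <= c <= M) (compact_P3 (-M) M)) as [l Hl].
  { intro n; specialize (Hb n); unfold Rabs in Hb; destruct (Rcase_abs (u n)); lra. }
  assert (Hp : forall N k, exists p, (N <= p)%nat /\ Rabs (u p - l) < / INR (S k)).
  { intros N k. assert (Hk : 0 < / INR (S k)) by (apply Rinv_0_lt_compat, lt_0_INR; lia).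
    destruct (Hl (disc l (mkposreal _ Hk)) N) as [p [Hp1 Hp2]].
    - exists (mkposreal _ Hk); intros y Hy; exact Hy.
    - exists p; split; auto. }
  set (pick := fun N k => proj1_sig (constructive_indefinite_description _ (Hp N k))).
  assert (Hpick : forall N k, (N <= pick N k)%nat /\ Rabs (u (pick N k) - l) < / INR (S k)).
  { intros; unfold pick; destruct constructive_indefinite_description; auto. }
  set (f := fix f n := match n with O => pick 0%nat 0%nat | S m => pick (S (f m)) (S m) end).
  exists f. split.
  - intro n. simpl. destruct (Hpick (S (f n)) (S n)); lia.
  - exists l. intros eps He.
    destruct (inv_small eps He) as [N HN]. exists N. intros n Hn. unfold R_dist.
    assert (Hf : Rabs (u (f n) - l) < / INR (S n)) by (destruct n; simpl; apply Hpick).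
    specialize (HN n Hn). lra.
Qed.

Lemma diagonal_extract (U : nat -> nat -> R) (Mb : nat -> R) :
  (forall m n, Rabs (U m n) <= Mb m) ->
  exists g, incr g /\ forall m, exists l, Un_cv (fun n => U m (g n)) l.
Proof.
  intros Hb.
  assert (Hs : forall (phi : nat -> nat) m, exists th, incr th /\ exists l, Un_cv (fun n => U m (phi (th n))) l).
  { intros phi m. apply (bolzano_extract (fun n => U m (phi n)) (Mb m)). intros; apply Hb. }
  set (E := fun phi m => proj1_sig (constructive_indefinite_description _ (Hs phi m))).
  assert (HE : forall phi m, incr (E phi m) /\ exists l, Un_cv (fun n => U m (phi (E phi m n))) l).
  { intros; unfold E; destruct constructive_indefinite_description; auto. }
  set (Phi := fix Phi m := match m with O => E (fun n => n) 0%nat | S k => fun n => Phi k (E (Phi k) (S k) n) end).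
  assert (Hinc : forall m, incr (Phi m)).
  { induction m; simpl. apply HE. apply incr_comp; auto. apply HE. }
  assert (Hcv : forall m, exists l, Un_cv (fun n => U m (Phi m n)) l).
  { destruct m; simpl. apply (HE (fun n => n) 0%nat). apply HE. }
  assert (Hstep : forall m k t, exists t', (t <= t')%nat /\ Phi (m + k)%nat t = Phi m t').
  { intros m k; induction k; intros t.
    - exists t; split; auto; rewrite Nat.add_0_r; auto.
    - rewrite Nat.add_succ_r. simpl. destruct (IHk (E (Phi (m + k)%nat) (S (m + k)) t)) as [t' [H1 H2]].
      exists t'; split; auto. pose proof (incr_ge _ (proj1 (HE (Phi (m + k)%nat) (S (m + k)))) t). lia. }
  exists (fun n => Phi n n). split.
  - intro n. simpl. pose proof (incr_ge _ (proj1 (HE (Phi n) (S n))) (S n)).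
    apply incr_lt; auto; lia.
  - intro m. destruct (Hcv m) as [l Hl]. exists l. intros eps He.
    destruct (Hl eps He) as [N HN]. exists (N + m)%nat. intros n Hn.
    destruct (Hstep m (n - m)%nat n) as [t' [H1 H2]]. replace (m + (n - m))%nat with n in H2 by lia.
    rewrite H2. apply HN. lia.
Qed.

Lemma compact_cfg {d} (u : nat -> config d) (M : site d -> R) :
  (forall n i, Rabs (u n i) <= M i) ->
  exists g, incr g /\ exists v : config d, forall i, Un_cv (fun n => u (g n) i) (v i).
Proof.
  intros Hb. destruct (diagonal_extract (fun m n => u n (senum d m)) (fun m => M (senum d m))) as [g [Hg Hc]].
  { intros; apply Hb. }
  exists g; split; auto.
  assert (Hi : forall i, exists l, Un_cv (fun n => u (g n) i) l).
  { intro i. destruct (senum_surj d i) as [m <-]. apply Hc. }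
  exists (fun i => proj1_sig (constructive_indefinite_description _ (Hi i))).
  intro i; destruct constructive_indefinite_description; auto.
Qed.

Lemma finite_eventually {d} (L : list (site d)) (u : nat -> config d) (v : config d) delta :
  delta > 0 -> (forall i, In i L -> Un_cv (fun n => u n i) (v i)) ->
  exists N, forall n, (n >= N)%nat -> forall i, In i L -> Rabs (u n i - v i) < delta.
Proof.
  intros Hd; induction L; intros H.
  - exists 0%nat; intros n _ i [].
  - destruct IHL as [N1 H1]. { intros; apply H; right; auto. }
    destruct (H a (or_introl eq_refl) delta Hd) as [N2 H2].
    exists (N1 + N2)%nat. intros n Hn i [<-|Hi].
    + apply H2; lia.
    + apply H1; auto; lia.
Qed.

Lemma sumFin_cv m (f : nat -> Fin.t m -> R) (l : Fin.t m -> R) :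
  (forall a, Un_cv (fun n => f n a) (l a)) -> Un_cv (fun n => sumFin m (f n)) (sumFin m l).
Proof.
  revert f l; induction m; intros f l H; simpl.
  - apply Un_cv_const.
  - apply CV_plus; [apply H|]. apply (IHm (fun n a => f n (Fin.FS a)) (fun a => l (Fin.FS a))). intros; apply H.
Qed.

Lemma lsum_cv {d} (F : nat -> site d -> R) (G : site d -> R) L :
  (forall j, In j L -> Un_cv (fun n => F n j) (G j)) -> Un_cv (fun n => lsum (F n) L) (lsum G L).
Proof.
  induction L; intros H; simpl.
  - apply Un_cv_const.
  - apply CV_plus. apply H; left; auto. apply IHL; intros; apply H; right; auto.
Qed.

Fixpoint running_min {d} (fam : nat -> config d) (n : nat) : config d :=
  match n with O => fam 0%nat | S m => cfg_min (running_min fam m) (fam (S m)) end.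

Lemma running_min_below {d} (fam : nat -> config d) n m i :
  (m <= n)%nat -> running_min fam n i <= fam m i.
Proof.
  revert m; induction n; intros m Hm.
  - replace m with 0%nat by lia; simpl; lra.
  - simpl; unfold cfg_min. destruct (Nat.eq_dec m (S n)).
    + subst; apply Rmin_r.
    + eapply Rle_trans; [apply Rmin_l|]. apply IHn; lia.
Qed.

Lemma running_min_attained {d} (fam : nat -> config d) n i :
  exists m, running_min fam n i = fam m i.
Proof.
  induction n.
  - exists 0%nat; auto.
  - simpl; unfold cfg_min. destruct (Rle_dec (running_min fam n i) (fam (S n) i)).
    + rewrite Rmin_left; auto.
    + exists (S n); rewrite Rmin_right; auto; lra.
Qed.

Lemma running_min_lb {d} (fam : nat -> config d) (lb : config d) n i :
  (forall m, lb i <= fam m i) -> lb i <= running_min fam n i.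
Proof.
  intros H; induction n; simpl; auto. unfold cfg_min. apply Rmin_glb; auto.
Qed.

Lemma countable_infimum {d} (fam : nat -> config d) (lb : config d) (P : config d -> Prop) :
  (forall n i, lb i <= fam n i) ->
  (forall n, P (fam n)) ->
  (forall u n, P u -> P (cfg_min u (fam n))) ->
  (forall (u : nat -> config d) v, (forall n, P (u n)) -> (forall n i, u (S n) i <= u n i) ->
     (forall i, Un_cv (fun n => u n i) (v i)) -> P v) ->
  exists g, P g /\ (forall n, cfg_le g (fam n)) /\
    (forall i eps, eps > 0 -> exists n, fam n i < g i + eps).
Proof.
  intros Hlb Hfam Hmin Hlim.
  set (pm := running_min fam).
  assert (Hdec : forall n i, pm (S n) i <= pm n i).
  { intros n i; simpl; unfold cfg_min; apply Rmin_l. }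
  assert (Hcv : forall i, { l | Un_cv (fun n => pm n i) l }).
  { intro i. apply decreasing_cv.
    - intro n; apply Hdec.
    - exists (- lb i). intros y [n ->]. unfold opp_seq.
      pose proof (running_min_lb fam lb n i (fun m => Hlb m i)). unfold pm; lra. }
  set (g := fun i => proj1_sig (Hcv i)).
  assert (Hg : forall i, Un_cv (fun n => pm n i) (g i)).
  { intro i; unfold g; destruct (Hcv i); auto. }
  exists g. split; [|split].
  - apply (Hlim pm); auto. unfold pm; induction n; simpl; auto.
  - intros m i. eapply Rle_trans; [apply (decreasing_limit_le (fun n => pm n i) (g i) m); auto|].
    apply running_min_below; auto.
  - intros i eps He. destruct (Hg i eps He) as [N HN]. specialize (HN N (le_n _)).
    unfold R_dist in HN. apply Rabs_def2 in HN. destruct (running_min_attained fam N i) as [m Hm].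
    exists m. unfold pm in HN. lra.
Qed.

Lemma enumerate_translates {d} (x : config d) (T : site d -> Z -> Prop) :
  T orig 0%Z -> exists fam : nat -> config d,
    (forall n, exists k l, T k l /\ fam n = tau k l x) /\
    (forall k l, T k l -> exists n, fam n = tau k l x).
Proof.
  intros H00.
  exists (fun n => let '(k, l) := penum d n in
                  if excluded_middle_informative (T k l) then tau k l x else x).
  split.
  - intro n; destruct (penum d n) as [k l].
    destruct (excluded_middle_informative (T k l)).
    + exists k, l; auto.
    + exists orig, 0%Z; split; auto; rewrite tau00; auto.
  - intros k l Hp. destruct (penum_surj d k l) as [n Hn]. exists n; rewrite Hn.
    destruct (excluded_middle_informative (T k l)); tauto.
Qed.

(* This is how ordered
   (Birkhoff) configurations are produced from arbitrary ones. *)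
Lemma infimum_of_translates {d} (x : config d) (w : Fin.t d -> R) (C : R)
  (T : site d -> Z -> Prop) (P : config d -> Prop) :
  (forall i k, x (site_add i k) - x i - inner w k >= - C) ->
  T orig 0%Z -> (forall k l, T k l -> inner w k + IZR l >= 0) ->
  (forall k l, T k l -> P (tau k l x)) ->
  (forall u k l, P u -> T k l -> P (cfg_min u (tau k l x))) ->
  (forall (u : nat -> config d) v, (forall n, P (u n)) -> (forall n i, u (S n) i <= u n i) ->
     (forall i, Un_cv (fun n => u n i) (v i)) -> P v) ->
  exists g, P g /\
    (forall k l, (forall k' l', T k' l' -> T (site_add k k') (l + l')%Z) -> cfg_le g (tau k l g)) /\
    (forall k l, (forall k' l', T k' l' -> T (site_sub k' k) (l' - l)%Z) -> cfg_le (tau k l g) g).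
Proof.
  intros HC H00 Hpos Hmem Hmin Hlim.
  destruct (enumerate_translates x T H00) as [fam [Hfam Hsurj]].
  destruct (countable_infimum fam (fun i => x i - C) P) as [g [Pg [Hle Happ]]].
  - intros n i. destruct (Hfam n) as [k [l [Hp ->]]]. unfold tau.
    specialize (HC i k). specialize (Hpos k l Hp). lra.
  - intro n; destruct (Hfam n) as [k [l [Hp ->]]]; auto.
  - intros u n Hu; destruct (Hfam n) as [k [l [Hp ->]]]; auto.
  - exact Hlim.
  - assert (G1 : forall i k l, T k l -> g i <= x (site_add i k) + IZR l).
    { intros i k l Hp. destruct (Hsurj k l Hp) as [m Hm].
      specialize (Hle m i). rewrite Hm in Hle. exact Hle. }
    assert (G2 : forall i eps, eps > 0 -> exists k l, T k l /\ x (site_add i k) + IZR l < g i + eps).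
    { intros i eps He. destruct (Happ i eps He) as [m Hm].
      destruct (Hfam m) as [k [l [Hp E]]]. exists k, l; split; auto. rewrite E in Hm. exact Hm. }
    exists g. split; [|split]; auto.
    + intros k l Hcl i. unfold tau. apply le_epsilon. intros eps He.
      destruct (G2 (site_add i k) eps He) as [k' [l' [Hp Hlt]]].
      pose proof (G1 i (site_add k k') (l + l')%Z (Hcl k' l' Hp)).
      rewrite <- site_add_assoc, plus_IZR in H. lra.
    + intros k l Hcl i. unfold tau. apply le_epsilon. intros eps He.
      destruct (G2 i eps He) as [k' [l' [Hp Hlt]]].
      pose proof (G1 (site_add i k) (site_sub k' k) (l' - l)%Z (Hcl k' l' Hp)).
      replace (site_add (site_add i k) (site_sub k' k)) with (site_add i k') in H
        by (apply site_ext; intro a; unfold site_add, site_sub; lia).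
      rewrite minus_IZR in H. lra.
Qed.

Definition ratvec {d} (Q : nat) (P : Fin.t d -> Z) : Fin.t d -> R := fun a => IZR (P a) / INR Q.

Lemma inner_ratvec_axis {d} Q (P : Fin.t d -> Z) a : (Q >= 1)%nat -> inner (ratvec Q P) (axis a (Z.of_nat Q)) = IZR (P a).
Proof.
  intros HQ. rewrite inner_axis. unfold ratvec. rewrite <- INR_IZR_INZ. field. apply not_0_INR; lia.
Qed.

Lemma ratvec_mult {d} Q (P : Fin.t d -> Z) N : (Q >= 1)%nat -> (N >= 1)%nat -> ratvec (N * Q) (fun a => (Z.of_nat N * P a)%Z) = ratvec Q P.
Proof.
  intros HQ HN. apply functional_extensionality; intro a. unfold ratvec.
  rewrite mult_IZR, mult_INR, <- INR_IZR_INZ. field. split; apply not_0_INR; lia.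
Qed.

Definition rat_approx {d} (w : Fin.t d -> R) (n : nat) : Fin.t d -> R :=
  ratvec (S n) (fun a => floorZ (INR (S n) * w a)).

Lemma rat_approx_error {d} (w : Fin.t d -> R) n a : Rabs (rat_approx w n a - w a) <= / INR (S n).
Proof.
  unfold rat_approx, ratvec. pose proof (floorZ_spec (INR (S n) * w a)) as Hf.
  assert (Hpos : INR (S n) > 0) by (apply lt_0_INR; lia).
  replace (IZR (floorZ (INR (S n) * w a)) / INR (S n) - w a)
    with ((IZR (floorZ (INR (S n) * w a)) - INR (S n) * w a) * / INR (S n)) by (field; lra).
  rewrite Rabs_mult, Rabs_inv, (Rabs_right (INR _)) by lra.
  rewrite <- (Rmult_1_l (/ INR (S n))) at 2.
  apply Rmult_le_compat_r; [left; apply Rinv_0_lt_compat; lra|].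
  unfold Rabs; destruct Rcase_abs; lra.
Qed.

Lemma rat_approx_cv {d} (w : Fin.t d -> R) a : Un_cv (fun n => rat_approx w n a) (w a).
Proof.
  intros eps He. destruct (inv_small eps He) as [N HN]. exists N; intros n Hn.
  unfold R_dist. eapply Rle_lt_trans; [apply rat_approx_error|]. auto.
Qed.

Lemma rat_approx_bound {d} (w : Fin.t d -> R) n a : Rabs (rat_approx w n a) <= Rabs (w a) + 1.
Proof.
  pose proof (rat_approx_error w n a).
  assert (/ INR (S n) <= 1).
  { rewrite <- Rinv_1. apply Rinv_le_contravar; [lra|]. rewrite S_INR; pose proof (pos_INR n); lra. }
  replace (rat_approx w n a) with (w a + (rat_approx w n a - w a)) by ring.
  eapply Rle_trans; [apply Rabs_triang|]. lra.
Qed.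

Definition ordered {d} (w : Fin.t d -> R) (y : config d) :=
  forall k l, (inner w k + IZR l >= 0 -> cfg_le y (tau k l y)) /\ (inner w k + IZR l <= 0 -> cfg_le (tau k l y) y).

Lemma ordered_tau {d} (w : Fin.t d -> R) y k0 l0 : ordered w y -> ordered w (tau k0 l0 y).
Proof.
  intros H k l; split; intro Hc; rewrite tau_comm; apply tau_mono; apply H; auto.
Qed.

Lemma ordered_deviation {d} (w : Fin.t d -> R) y : ordered w y -> forall i k, Rabs (y (site_add i k) - y i - inner w k) <= 1.
Proof.
  intros H i k. set (t := inner w k). pose proof (floorZ_spec t) as Hf.
  destruct (H k (- floorZ t)%Z) as [H1 _]. destruct (H k (- (floorZ t + 1))%Z) as [_ H2].
  specialize (H1 ltac:(rewrite opp_IZR; fold t; lra) i).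
  specialize (H2 ltac:(rewrite opp_IZR, plus_IZR; fold t; simpl; lra) i).
  unfold tau in H1, H2. rewrite opp_IZR in H1. rewrite opp_IZR, plus_IZR in H2. simpl in H2.
  unfold Rabs; destruct Rcase_abs; fold t; lra.
Qed.

Lemma cv_of_bounded_deviation (u : nat -> R) l A :
  (forall n, Rabs (u n - INR n * l) <= A) -> Un_cv (fun n => u n / INR n) l.
Proof.
  intros Hdev eps He.
  assert (HA : A >= 0) by (pose proof (Hdev 0%nat); pose proof (Rabs_pos (u 0%nat - INR 0 * l)); lra).
  assert (He' : eps / (A + 1) > 0) by (apply Rdiv_lt_0_compat; lra).
  destruct (inv_small _ He') as [N HN]. exists (S N). intros n Hn.
  destruct n as [|m]; [lia|]. specialize (HN m ltac:(lia)).
  unfold R_dist. assert (Hp : INR (S m) > 0) by (apply lt_0_INR; lia).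
  replace (u (S m) / INR (S m) - l) with ((u (S m) - INR (S m) * l) * / INR (S m)) by (field; lra).
  rewrite Rabs_mult, Rabs_inv, (Rabs_right (INR _)) by lra.
  specialize (Hdev (S m)).
  apply Rle_lt_trans with (A * / INR (S m)).
  - apply Rmult_le_compat_r; [left; apply Rinv_0_lt_compat; lra|auto].
  - apply Rle_lt_trans with (A * (eps / (A + 1))).
    + apply Rmult_le_compat_l; lra.
    + unfold Rdiv. replace (A * (eps * / (A + 1))) with (eps * (A / (A + 1))) by (field; lra).
      assert (A / (A + 1) < 1)
        by (apply Rmult_lt_reg_r with (A + 1); [lra|]; unfold Rdiv; rewrite Rmult_assoc, Rinv_l; lra).
      nra.
Qed.

Lemma ordered_rotation_vector {d} (w : Fin.t d -> R) (y : config d) : ordered w y -> rotation_vector y w.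
Proof.
  intros Ho i. apply (cv_of_bounded_deviation _ _ (1 + Rabs (y orig))). intro n.
  pose proof (ordered_deviation w y Ho orig (site_scale n i)) as X. rewrite site_add_0l, inner_scale in X.
  replace (y (site_scale n i) - INR n * inner w i)
    with ((y (site_scale n i) - y orig - INR n * inner w i) + y orig) by ring.
  eapply Rle_trans; [apply Rabs_triang|]. lra.
Qed.

Lemma ordered_Bbar {d} (w : Fin.t d -> R) (y : config d) : ordered w y -> Bbar w y.
Proof.
  intros Ho. split; [|split].
  - intros k l. destruct (Rle_dec 0 (inner w k + IZR l)).
    + left; apply (proj1 (Ho k l)); lra.
    + right; apply (proj2 (Ho k l)); lra.
  - apply ordered_rotation_vector; auto.
  - intros k l Hc. apply cfg_ext; intro i. apply Rle_antisym.
    + apply (proj2 (Ho k l)); lra.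
    + apply (proj1 (Ho k l)); lra.
Qed.

Lemma ordered_site_bound {d} (w v : Fin.t d -> R) (y : config d) :
  ordered v y -> Rabs (y orig) <= 1 -> (forall a, Rabs (v a) <= Rabs (w a) + 1) ->
  forall i, Rabs (y i) <= 2 + sumFin d (fun a => (Rabs (w a) + 1) * IZR (Z.abs (i a))).
Proof.
  intros Ho H0 Hv i. pose proof (ordered_deviation _ _ Ho orig i) as X. rewrite site_add_0l in X.
  assert (Rabs (inner v i) <= sumFin d (fun a => (Rabs (w a) + 1) * IZR (Z.abs (i a)))).
  { unfold inner. eapply Rle_trans; [apply sumFin_abs|]. apply sumFin_le; intro a.
    rewrite Rabs_mult, <- abs_IZR. apply Rmult_le_compat_r; [apply IZR_le; lia|apply Hv]. }
  replace (y i) with ((y i - y orig - inner v i) + y orig + inner v i) by ring.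
  eapply Rle_trans; [apply Rabs_triang|]. eapply Rle_trans; [apply Rplus_le_compat_r, Rabs_triang|]. lra.
Qed.

Definition comparable {d} (u v : config d) := cfg_le u v \/ cfg_le v u.

Lemma comparable_limit {d} (u v : nat -> config d) (u0 v0 : config d) :
  (forall i, Un_cv (fun n => u n i) (u0 i)) -> (forall i, Un_cv (fun n => v n i) (v0 i)) ->
  (forall n, comparable (u n) (v n)) -> comparable u0 v0.
Proof.
  intros Hu Hv H.
  destruct (classic (forall N, exists n, (n >= N)%nat /\ cfg_le (u n) (v n))) as [Hio|Hno].
  - left; intro i. apply (Un_cv_io (fun n => u n i) (fun n => v n i)); auto.
    intro N; destruct (Hio N) as [n [Hn Hl]]; exists n; split; auto.
  - right; intro i. apply not_all_ex_not in Hno. destruct Hno as [N HN].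
    apply (Un_cv_io (fun n => v n i) (fun n => u n i)); auto.
    intro N'. exists (N + N')%nat. split; [lia|].
    destruct (H (N + N')%nat) as [Hl|Hl]; auto. exfalso; apply HN. exists (N + N')%nat; split; [lia|auto].
Qed.

Section Potentials.

Variable d : nat.
Variable S : site d -> config d -> R.
Variable r : R.
Variable D1 : site d -> site d -> config d -> R.
Variable D2 : site d -> site d -> site d -> config d -> R.
Hypothesis Hr : 0 < r.
Hypothesis HA_loc : forall j x y, (forall i, norm1 (site_sub i j) <= r -> x i = y i) -> S j x = S j y.
Hypothesis HA_d1 : forall j i, has_partial i (S j) (D1 j i).
Hypothesis HA_d2 : forall j i k, has_partial k (D1 j i) (D2 j i k).
Hypothesis HA_c0 : forall j, cfg_continuous (S j).
Hypothesis HB : forall j k l x, S j (tau k l x) = S (site_add j k) x.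
Hypothesis HC_bdd : forall j, exists m, forall x, m <= S j x.
Hypothesis HC_coer : forall j k, norm1 (site_sub k j) = 1 ->
     forall M, exists R0, forall x, R0 < Rabs (x k - x j) -> M < S j x.
Hypothesis HD1 : forall j i k x, i <> k -> D2 j i k x <= 0.

(* Locality: S j only depends on the sites of the finite box [ball_sites j]
   around j, so it is continuous for pointwise convergence, and global
   minimality passes to pointwise limits. *)
Definition rad : nat := Z.to_nat (up r).

Definition ball_sites (j : site d) : list (site d) := boxlist d (fun a => (j a - Z.of_nat rad)%Z) (2 * rad + 1).

Lemma ball_coord (i j : site d) a : norm1 (site_sub i j) <= r -> (Z.abs (i a - j a) < Z.of_nat rad)%Z.
Proof.
  intros H. pose proof (norm1_coord (site_sub i j) a) as X.
  assert (E : site_sub i j a = (i a - j a)%Z) by reflexivity. rewrite E in X.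
  destruct (archimed r) as [H1 _].
  assert (Z.abs (i a - j a) < up r)%Z by (apply lt_IZR; lra).
  assert (0 < up r)%Z by (apply lt_IZR; lra). unfold rad. lia.
Qed.

Lemma ball_sites_spec j i : norm1 (site_sub i j) <= r -> In i (ball_sites j).
Proof.
  intros H. apply In_boxlist. intro a. pose proof (ball_coord i j a H). lia.
Qed.

Lemma potential_local j x y : (forall i, In i (ball_sites j) -> x i = y i) -> S j x = S j y.
Proof. intros H; apply HA_loc; intros i Hi; apply H, ball_sites_spec; auto. Qed.

Lemma potential_cv j (u : nat -> config d) v : (forall i, Un_cv (fun n => u n i) (v i)) -> Un_cv (fun n => S j (u n)) (S j v).
Proof.
  intros H eps He. destruct (HA_c0 j v eps He) as [del [Hd Hc]].
  destruct (finite_eventually (ball_sites j) u v del Hd) as [N HN]. { intros; apply H. }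
  exists N; intros n Hn. unfold R_dist.
  set (u' := fun i => if excluded_middle_informative (In i (ball_sites j)) then u n i else v i).
  rewrite (potential_local j (u n) u').
  - apply Hc. intro i; unfold u'. destruct (excluded_middle_informative (In i (ball_sites j))).
    + apply HN; auto.
    + rewrite Rminus_diag, Rabs_R0; auto.
  - intros i Hi; unfold u'; destruct (excluded_middle_informative (In i (ball_sites j))); tauto.
Qed.

Lemma W_cv B (u : nat -> config d) v : (forall i, Un_cv (fun n => u n i) (v i)) -> Un_cv (fun n => W S B (u n)) (W S B v).
Proof. intros H. unfold W. apply (lsum_cv (fun n j => S j (u n)) (fun j => S j v)). intros; apply potential_cv; auto. Qed.

Lemma global_minimizer_limit (u : nat -> config d) v : (forall n, global_minimizer S r (u n)) ->
  (forall i, Un_cv (fun n => u n i) (v i)) -> global_minimizer S r v.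
Proof.
  intros Hg Hc B y HB0 Hy.
  apply (Un_cv_le (fun n => W S B (u n)) (fun n => W S B (cfg_add (u n) y))).
  - apply W_cv; auto.
  - apply W_cv. intro i. unfold cfg_add. apply CV_plus; auto. apply Un_cv_const.
  - intro n; apply Hg; auto.
Qed.

(* By (B) the potentials are uniformly bounded below, and translates of global
   minimizers are global minimizers. *)
Lemma potential_lower_bound : exists m0, forall j x, m0 <= S j x.
Proof.
  destruct (HC_bdd orig) as [m Hm]. exists m; intros j x.
  rewrite <- (site_add_0l j), <- (HB orig j 0%Z x). apply Hm.
Qed.

Lemma global_minimizer_tau x k l : global_minimizer S r x -> global_minimizer S r (tau k l x).
Proof.
  intros Hx B y HB0 Hy.
  set (B' := map (fun j => site_add j k) B). set (y' := fun i => y (site_sub i k)).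
  assert (E1 : W S B (tau k l x) = W S B' x).
  { rewrite !W_lsum. unfold B'. rewrite lsum_map. apply lsum_ext; intros; apply HB. }
  assert (E2 : W S B (cfg_add (tau k l x) y) = W S B' (cfg_add x y')).
  { replace (cfg_add (tau k l x) y) with (tau k l (cfg_add x y')).
    - rewrite !W_lsum. unfold B'; rewrite lsum_map. apply lsum_ext; intros; apply HB.
    - apply cfg_ext; intro i; unfold cfg_add, tau, y'. rewrite site_sub_add; ring. }
  rewrite E1, E2. apply Hx.
  - unfold B'. apply FinFun.Injective_map_NoDup; auto. intros a b E.
    rewrite <- (site_sub_add a k), E, site_sub_add; auto.
  - intros i Hi. unfold y' in Hi. destruct (Hy _ Hi) as [H1 H2]. split.
    + unfold B'; apply in_map_iff. exists (site_sub i k); split; auto. apply site_add_sub.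
    + intros k' Hk'. unfold B'; apply in_map_iff. exists (site_sub k' k); split; [apply site_add_sub|].
      apply H2. replace (site_sub (site_sub k' k) (site_sub i k)) with (site_sub k' i); auto.
      apply site_ext; intro a; unfold site_sub; lia.
Qed.

(* Submodularity S(min x y) + S(max x y) <= S x + S y.  For two coordinates it
   follows from the sign of the mixed second derivative by the mean value
   theorem; it then extends coordinate by coordinate over the finitely many
   sites S j depends on. *)
Lemma nonpos_derivative_antitone (f f' : R -> R) a b :
  (forall t, derivable_pt_lim f t (f' t)) -> (forall t, f' t <= 0) -> a <= b -> f b <= f a.
Proof.
  intros Hd Hn Hab. destruct (Rle_lt_or_eq_dec a b Hab) as [Hlt|<-]; [|lra].
  set (pr := fun x => exist (fun l => derivable_pt_lim f x l) (f' x) (Hd x) : derivable_pt f x).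
  destruct (MVT_cor1 f a b pr Hlt) as [c [Hc _]].
  assert (derive_pt f c (pr c) = f' c) by reflexivity.
  rewrite H in Hc. specialize (Hn c). nra.
Qed.

Lemma potential_partial j q (w : config d) t :
  derivable_pt_lim (fun t => S j (upd w q t)) t (D1 j q (upd w q t)).
Proof.
  pose proof (HA_d1 j q (upd w q t)) as X. unfold has_partial in X.
  rewrite upd_eq in X.
  replace (fun t0 => S j (upd (upd w q t) q t0)) with (fun t0 => S j (upd w q t0)) in X; auto.
  apply functional_extensionality; intro; rewrite upd_upd; auto.
Qed.

Lemma first_partial_partial j q p (w : config d) t :
  derivable_pt_lim (fun t => D1 j q (upd w p t)) t (D2 j q p (upd w p t)).
Proof.
  pose proof (HA_d2 j q p (upd w p t)) as X. unfold has_partial in X.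
  rewrite upd_eq in X.
  replace (fun t0 => D1 j q (upd (upd w p t) p t0)) with (fun t0 => D1 j q (upd w p t0)) in X; auto.
  apply functional_extensionality; intro; rewrite upd_upd; auto.
Qed.

Lemma mixed_difference_two_coords j (u : config d) p q sa sb t0 t1 : p <> q -> sa <= sb -> t0 <= t1 ->
  S j (upd (upd u p sb) q t1) - S j (upd (upd u p sa) q t1) <=
  S j (upd (upd u p sb) q t0) - S j (upd (upd u p sa) q t0).
Proof.
  intros Hpq Hs Ht.
  apply (nonpos_derivative_antitone (fun t => S j (upd (upd u p sb) q t) - S j (upd (upd u p sa) q t))
    (fun t => D1 j q (upd (upd u p sb) q t) - D1 j q (upd (upd u p sa) q t))); auto.
  - intro t. apply derivable_pt_lim_minus; apply potential_partial.
  - intro t. rewrite !(upd_comm u p q) by auto.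
    assert (D1 j q (upd (upd u q t) p sb) <= D1 j q (upd (upd u q t) p sa)).
    { apply (nonpos_derivative_antitone (fun s => D1 j q (upd (upd u q t) p s))
        (fun s => D2 j q p (upd (upd u q t) p s))).
      - intro; apply first_partial_partial.
      - intro; apply HD1; auto.
      - exact Hs. }
    lra.
Qed.

Lemma mixed_diff_on j L : forall (u v : config d) p sa sb, (forall i, ~ In i L -> v i = u i) -> cfg_le u v -> v p = u p -> sa <= sb ->
  S j (upd v p sb) - S j (upd v p sa) <= S j (upd u p sb) - S j (upd u p sa).
Proof.
  induction L as [|q L IH]; intros u v p sa sb Hoff Hle Hp Hs.
  - replace v with u; [lra|]. apply cfg_ext; intro i; symmetry; apply Hoff; auto.
  - set (v1 := upd v q (u q)).
    assert (H1 : S j (upd v1 p sb) - S j (upd v1 p sa) <= S j (upd u p sb) - S j (upd u p sa)).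
    { apply IH.
      - intros i Hi. unfold v1, upd. destruct (excluded_middle_informative (i = q)); subst; auto.
        apply Hoff. intros [E|E]; auto.
      - intro i. unfold v1, upd. destruct (excluded_middle_informative (i = q)); subst; [lra|apply Hle].
      - unfold v1, upd. destruct (excluded_middle_informative (p = q)); subst; auto.
      - auto. }
    destruct (excluded_middle_informative (p = q)) as [E|E].
    + subst q. unfold v1 in H1. rewrite !upd_upd in H1. auto.
    + assert (Ev : v = upd v1 q (v q)) by (unfold v1; rewrite upd_upd, upd_same; auto).
      assert (Hq : v1 q <= v q) by (unfold v1; rewrite upd_eq; apply Hle).
      assert (X := mixed_difference_two_coords j v1 p q sa sb (v1 q) (v q) E Hs Hq).
      assert (Ea : forall s, upd v p s = upd (upd v1 p s) q (v q)).
      { intro s. rewrite Ev at 1. rewrite upd_comm; auto. }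
      assert (Eb : forall s, upd v1 p s = upd (upd v1 p s) q (v1 q)).
      { intro s. symmetry. transitivity (upd (upd v1 p s) q (upd v1 p s q)). f_equal. rewrite upd_neq; auto. apply upd_same. }
      rewrite !Ea. rewrite (Eb sa), (Eb sb) in H1. lra.
Qed.

(* Increments of S j in one coordinate decrease when the other coordinates
   increase; by locality only the finitely many sites near j matter. *)
Lemma mixed_diff_antitone j (u v : config d) p sa sb : cfg_le u v -> v p = u p -> sa <= sb ->
  S j (upd v p sb) - S j (upd v p sa) <= S j (upd u p sb) - S j (upd u p sa).
Proof.
  intros Hle Hp Hs.
  set (v' := fun i => if excluded_middle_informative (In i (ball_sites j)) then v i else u i).
  assert (E : forall s, S j (upd v p s) = S j (upd v' p s)).
  { intro s; apply potential_local; intros i Hi; unfold upd, v'.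
    destruct (excluded_middle_informative (i = p)); auto.
    destruct (excluded_middle_informative (In i (ball_sites j))); tauto. }
  rewrite !E. apply (mixed_diff_on j (ball_sites j)); auto.
  - intros i Hi; unfold v'; destruct (excluded_middle_informative (In i (ball_sites j))); tauto.
  - intro i; unfold v'; destruct (excluded_middle_informative (In i (ball_sites j))); [apply Hle|lra].
  - unfold v'; destruct (excluded_middle_informative (In p (ball_sites j))); auto.
Qed.

Ltac minmax_arith := unfold cfg_min, cfg_max, Rmin, Rmax;
  repeat match goal with |- context [Rle_dec ?a ?b] => destruct (Rle_dec a b) end; lra.

Ltac upd_minmax_ext :=
  apply cfg_ext; let i := fresh "i" in intro i; unfold cfg_min, cfg_max, upd;
  repeat match goal with |- context [excluded_middle_informative (?a = ?b)] =>
    destruct (excluded_middle_informative (a = b)); [subst|] end; minmax_arith.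

Lemma submodular_on j L : forall (x y : config d), (forall i, ~ In i L -> x i = y i) ->
  S j (cfg_min x y) + S j (cfg_max x y) <= S j x + S j y.
Proof.
  induction L as [|p L IH]; intros x y Hoff.
  - assert (Exy : x = y) by (apply cfg_ext; intro i; apply Hoff; auto).
    subst y. replace (cfg_min x x) with x by (apply cfg_ext; intro i; minmax_arith).
    replace (cfg_max x x) with x by (apply cfg_ext; intro i; minmax_arith). lra.
  - (* x1 agrees with y at p and with x elsewhere, so differs from y only on L *)
    set (x1 := upd x p (y p)).
    assert (IH1 : S j (cfg_min x1 y) + S j (cfg_max x1 y) <= S j x1 + S j y).
    { apply IH. intros i Hi. unfold x1, upd. destruct (excluded_middle_informative (i = p)); [subst; auto|].
      apply Hoff; intros [E|E]; auto. }
    assert (Ex : x = upd x1 p (x p)) by (unfold x1; rewrite upd_upd, upd_same; auto).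
    assert (Ex1 : upd x1 p (y p) = x1) by (unfold x1; rewrite upd_upd; auto).
    destruct (Rle_dec (y p) (x p)) as [Hyx|Hxy].
    + (* moving coordinate p from y p up to x p gains less on max x1 y than on x1 *)
      assert (E1 : cfg_min x y = cfg_min x1 y) by (unfold x1; upd_minmax_ext).
      assert (E2 : cfg_max x y = upd (cfg_max x1 y) p (x p)) by (unfold x1; upd_minmax_ext).
      assert (EM : upd (cfg_max x1 y) p (y p) = cfg_max x1 y) by (unfold x1; upd_minmax_ext).
      assert (X := mixed_diff_antitone j x1 (cfg_max x1 y) p (y p) (x p)
                     ltac:(intro i; minmax_arith) ltac:(unfold cfg_max, x1; rewrite upd_eq; minmax_arith) Hyx).
      rewrite EM, Ex1, <- Ex in X. rewrite E1, E2. lra.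
    + (* moving coordinate p from x p up to y p gains less on x1 than on min x1 y *)
      assert (E1 : cfg_min x y = upd (cfg_min x1 y) p (x p)) by (unfold x1; upd_minmax_ext).
      assert (E2 : cfg_max x y = cfg_max x1 y) by (unfold x1; upd_minmax_ext).
      assert (EM : upd (cfg_min x1 y) p (y p) = cfg_min x1 y) by (unfold x1; upd_minmax_ext).
      assert (X := mixed_diff_antitone j (cfg_min x1 y) x1 p (x p) (y p)
                     ltac:(intro i; minmax_arith) ltac:(unfold cfg_min, x1; rewrite upd_eq; minmax_arith)
                     ltac:(lra)).
      rewrite Ex1, EM, <- Ex in X. rewrite E1, E2. lra.
Qed.

Lemma potential_submodular j (x y : config d) : S j (cfg_min x y) + S j (cfg_max x y) <= S j x + S j y.
Proof.
  set (x' := fun i => if excluded_middle_informative (In i (ball_sites j)) then x i else y i).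
  replace (S j (cfg_min x y)) with (S j (cfg_min x' y)).
  replace (S j (cfg_max x y)) with (S j (cfg_max x' y)).
  replace (S j x) with (S j x').
  - apply (submodular_on j (ball_sites j)).
    intros i Hi; unfold x'; destruct (excluded_middle_informative (In i (ball_sites j))); tauto.
  - apply potential_local; intros i Hi; unfold x'; destruct (excluded_middle_informative (In i (ball_sites j))); tauto.
  - apply potential_local; intros i Hi; unfold x', cfg_max; destruct (excluded_middle_informative (In i (ball_sites j))); tauto.
  - apply potential_local; intros i Hi; unfold x', cfg_min; destruct (excluded_middle_informative (In i (ball_sites j))); tauto.
Qed.

Definition periodic_cfg (Q : nat) (P : Fin.t d -> Z) (x : config d) :=
  forall a i, x (site_add i (axis a (Z.of_nat Q))) = x i + IZR (P a).

Definition energy (Q : nat) (x : config d) := boxsum d orig Q (fun j => S j x).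

Definition per_minimizer (Q : nat) (P : Fin.t d -> Z) (z : config d) :=
  periodic_cfg Q P z /\ forall u, periodic_cfg Q P u -> energy Q z <= energy Q u.

Lemma periodic_cfg_tau Q P x k l : periodic_cfg Q P x -> periodic_cfg Q P (tau k l x).
Proof.
  intros H a i; unfold tau.
  replace (site_add (site_add i (axis a (Z.of_nat Q))) k) with (site_add (site_add i k) (axis a (Z.of_nat Q))).
  rewrite H; ring. rewrite !site_add_assoc, (site_add_comm (axis a _) k); auto.
Qed.

Lemma periodic_cfg_min Q P x y : periodic_cfg Q P x -> periodic_cfg Q P y -> periodic_cfg Q P (cfg_min x y).
Proof. intros Hx Hy a i; unfold cfg_min; rewrite Hx, Hy. minmax_arith. Qed.

Lemma periodic_cfg_max Q P x y : periodic_cfg Q P x -> periodic_cfg Q P y -> periodic_cfg Q P (cfg_max x y).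
Proof. intros Hx Hy a i; unfold cfg_max; rewrite Hx, Hy. minmax_arith. Qed.

Lemma periodic_cfg_lim Q P (u : nat -> config d) v : (forall n, periodic_cfg Q P (u n)) ->
  (forall i, Un_cv (fun n => u n i) (v i)) -> periodic_cfg Q P v.
Proof.
  intros Hu Hc a i. apply (UL_sequence (fun n => u n (site_add i (axis a (Z.of_nat Q))))); auto.
  apply (Un_cv_ext (fun n => u n i + IZR (P a))). intro n; rewrite Hu; auto.
  apply CV_plus; auto. apply Un_cv_const.
Qed.

Lemma periodic_cfg_S_periodic Q P x : periodic_cfg Q P x -> periodic Q (fun j => S j x).
Proof.
  intros H a j. simpl. rewrite <- (HB j (axis a (Z.of_nat Q)) (- P a)%Z x).
  f_equal. apply cfg_ext; intro i; unfold tau. rewrite H, opp_IZR; ring.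
Qed.

Lemma energy_tau Q P x k l : periodic_cfg Q P x -> energy Q (tau k l x) = energy Q x.
Proof.
  intros H. unfold energy.
  rewrite (boxsum_ext _ _ _ _ (fun j => S (site_add j k) x)) by (intros; apply HB).
  rewrite (boxsum_reindex d Q (fun j => S j x)). apply boxsum_shift. apply (periodic_cfg_S_periodic Q P x H).
Qed.

Lemma energy_submodular Q x y : energy Q (cfg_min x y) + energy Q (cfg_max x y) <= energy Q x + energy Q y.
Proof.
  unfold energy, boxsum. rewrite <- !lsum_plus. apply lsum_le; intros; apply potential_submodular.
Qed.

Lemma energy_cv Q (u : nat -> config d) v : (forall i, Un_cv (fun n => u n i) (v i)) ->
  Un_cv (fun n => energy Q (u n)) (energy Q v).
Proof. intros H. unfold energy, boxsum. apply (lsum_cv (fun n j => S j (u n)) (fun j => S j v)). intros; apply potential_cv; auto. Qed.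

Lemma periodic_deviation_bound Q P x : (Q >= 1)%nat -> periodic_cfg Q P x -> exists C, forall i k,
  Rabs (x (site_add i k) - x i - inner (ratvec Q P) k) <= C.
Proof.
  intros HQ H. set (h := fun i => x i - inner (ratvec Q P) i).
  assert (Hp : periodic Q h).
  { intros a j; unfold h. rewrite H, inner_add, inner_ratvec_axis; auto; ring. }
  destruct (periodic_bounded Q h HQ Hp) as [C HC]. exists (2 * C). intros i k.
  replace (x (site_add i k) - x i - inner (ratvec Q P) k) with (h (site_add i k) - h i)
    by (unfold h; rewrite inner_add; ring).
  pose proof (HC (site_add i k)); pose proof (HC i).
  eapply Rle_trans; [apply Rabs_triang|]. rewrite Rabs_Ropp. lra.
Qed.

Lemma periodic_cfg_mult Q P x N : periodic_cfg Q P x -> periodic_cfg (N * Q) (fun a => (Z.of_nat N * P a)%Z) x.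
Proof.
  intros H a i. induction N.
  - simpl. rewrite Rplus_0_r. f_equal. apply site_ext; intro b; unfold site_add, axis; destruct (Fin.eq_dec a b); lia.
  - replace (site_add i (axis a (Z.of_nat (Datatypes.S N * Q)))) with
      (site_add (site_add i (axis a (Z.of_nat (N * Q)))) (axis a (Z.of_nat Q))).
    + rewrite H, IHN, Rplus_assoc, <- plus_IZR. f_equal. f_equal. lia.
    + apply site_ext; intro b; unfold site_add, axis; destruct (Fin.eq_dec a b); lia.
Qed.

Lemma energy_decomp Q P x N : periodic_cfg Q P x -> energy (N * Q) x = INR N ^ d * energy Q x.
Proof. intros H. unfold energy. apply boxsum_decomp. apply (periodic_cfg_S_periodic Q P x H). Qed.

Lemma periodic_cfg_inner Q (P : Fin.t d -> Z) : (Q >= 1)%nat -> periodic_cfg Q P (fun i => inner (ratvec Q P) i).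
Proof. intros HQ a i. rewrite inner_add, inner_ratvec_axis; auto. Qed.

Lemma energy_lower_bound Q : exists c, forall x, c <= energy Q x.
Proof.
  destruct potential_lower_bound as [m0 Hm0]. exists (INR (length (boxlist d orig Q)) * m0). intro x.
  unfold energy, boxsum. rewrite <- lsum_const. apply lsum_le; auto.
Qed.

(* Since all potentials are bounded below, the energy of a periodic configuration
   controls each single potential [S j v], not only those of the period box. *)
Lemma energy_controls_potential Q : (Q >= 1)%nat ->
  exists K, forall P v, periodic_cfg Q P v -> forall j, S j v <= energy Q v + K.
Proof.
  intros HQ. destruct potential_lower_bound as [m0 Hm0].
  set (L := boxlist d orig Q).
  exists (- INR (length L) * m0 + m0). intros P v Hv j.
  rewrite (periodic_modrep Q (fun j => S j v) HQ (periodic_cfg_S_periodic Q P v Hv) j). cbv beta.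
  assert (X : S (modrep (Z.of_nat Q) j) v - m0 <= lsum (fun j => S j v - m0) L).
  { apply (lsum_term (fun j => S j v - m0)); [|apply modrep_in; auto].
    intros; specialize (Hm0 j0 v); lra. }
  rewrite lsum_minus, lsum_const in X. unfold energy, boxsum. fold L. lra.
Qed.

Lemma potential_bound_neighbour_bound M : exists Rb, forall v : config d,
  (forall j, S j v <= M) -> forall j a, Rabs (v (site_add j (axis a 1)) - v j) <= Rb.
Proof.
  assert (Ra : forall a : Fin.t d, exists R0, forall x, R0 < Rabs (x (axis a 1%Z) - x orig) -> M < S orig x).
  { intro a; apply HC_coer. apply norm1_axis. }
  set (Rf := fun a => proj1_sig (constructive_indefinite_description _ (Ra a))).
  assert (HRf : forall a x, Rf a < Rabs (x (axis a 1%Z) - x orig) -> M < S orig x).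
  { intro a; unfold Rf; destruct constructive_indefinite_description; auto. }
  exists (sumFin d (fun a => Rabs (Rf a))). intros v Hv j a.
  destruct (Rle_dec (Rabs (v (site_add j (axis a 1%Z)) - v j)) (Rf a)) as [Hl|Hl].
  - eapply Rle_trans; [exact Hl|]. eapply Rle_trans; [apply Rle_abs|].
    apply (sumFin_term d (fun a => Rabs (Rf a))). intros; apply Rabs_pos.
  - exfalso. assert (X := HRf a (tau j 0 v)). unfold tau in X.
    rewrite site_add_0l, (site_add_comm (axis a 1%Z) j) in X. simpl IZR in X.
    replace (v (site_add j (axis a 1)) + 0 - (v j + 0)) with (v (site_add j (axis a 1)) - v j) in X by ring.
    specialize (X ltac:(lra)). fold (tau j 0 v) in X. rewrite HB, site_add_0l in X.
    specialize (Hv j). lra.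
Qed.

(* A minimizing sequence for the (Q,P)-periodic energy, normalized by vertical
   integer shifts so that |v_n(0)| <= 1; m is the infimum of the energy. *)
Lemma minimizing_sequence Q (P : Fin.t d -> Z) : (Q >= 1)%nat ->
  exists (m : R) (vn : nat -> config d), (forall u, periodic_cfg Q P u -> m <= energy Q u) /\
    forall n, periodic_cfg Q P (vn n) /\ energy Q (vn n) < m + / INR (Datatypes.S n) /\ Rabs (vn n orig) <= 1.
Proof.
  intros HQ. destruct (energy_lower_bound Q) as [c Hlb].
  set (E := fun v => exists u, periodic_cfg Q P u /\ v = - energy Q u).
  destruct (completeness E) as [lub [Hub Hleast]].
  { exists (- c). intros v [u [_ ->]]. specialize (Hlb u). lra. }
  { exists (- energy Q (fun i => inner (ratvec Q P) i)), (fun i => inner (ratvec Q P) i).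
    split; auto. apply periodic_cfg_inner; auto. }
  set (m := - lub).
  assert (Hm1 : forall u, periodic_cfg Q P u -> m <= energy Q u).
  { intros u Hu. assert (E (- energy Q u)) by (exists u; auto). specialize (Hub _ H). unfold m; lra. }
  assert (Hseq : forall n, exists v, periodic_cfg Q P v /\
             energy Q v < m + / INR (Datatypes.S n) /\ Rabs (v orig) <= 1).
  { intro n. assert (He : / INR (Datatypes.S n) > 0) by (apply Rinv_0_lt_compat, lt_0_INR; lia).
    destruct (classic (exists u, periodic_cfg Q P u /\ energy Q u < m + / INR (Datatypes.S n)))
      as [[u [Hu Fu]]|H].
    - exists (tau orig (- floorZ (u orig)) u). split; [apply periodic_cfg_tau; auto|split].
      + rewrite (energy_tau Q P); auto.
      + unfold tau. rewrite site_add_0r, opp_IZR. pose proof (floorZ_spec (u orig)).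
        unfold Rabs; destruct Rcase_abs; lra.
    - exfalso. assert (is_upper_bound E (lub - / INR (Datatypes.S n))).
      { intros v [u [Hu ->]]. destruct (Rlt_le_dec (energy Q u) (m + / INR (Datatypes.S n))) as [Hl|Hl].
        - exfalso; apply H; exists u; auto.
        - unfold m in Hl; lra. }
      specialize (Hleast _ H0). lra. }
  exists m, (fun n => proj1_sig (constructive_indefinite_description _ (Hseq n))). split; auto.
  intro n; destruct constructive_indefinite_description; auto.
Qed.

(* Existence of a minimizer of the periodic energy among the (Q,P)-periodic
   configurations: a normalized minimizing sequence is uniformly bounded at every
   site by coercivity (C), and a convergent subsequence has a minimizing limit
   since the energy is continuous. *)
Lemma periodic_minimizer_exists Q P : (Q >= 1)%nat -> exists z, per_minimizer Q P z.
Proof.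
  intros HQ. destruct (minimizing_sequence Q P HQ) as [m [vn [Hm1 Hvn]]].
  destruct (energy_controls_potential Q HQ) as [K HK].
  destruct (potential_bound_neighbour_bound (m + 1 + K)) as [Rb HRb].
  assert (Hnb : forall n j a, Rabs (vn n (site_add j (axis a 1%Z)) - vn n j) <= Rb).
  { intro n. apply HRb. intro j. destruct (Hvn n) as [Hp [HF _]].
    specialize (HK P (vn n) Hp j).
    assert (/ INR (Datatypes.S n) <= 1).
    { rewrite <- Rinv_1. apply Rinv_le_contravar; [lra|]. rewrite S_INR; pose proof (pos_INR n); lra. }
    lra. }
  set (Mb := fun i : site d => proj1_sig (constructive_indefinite_description _ (neighbour_bound_site_bound Rb i)) + 1).
  assert (Hbd : forall n i, Rabs (vn n i) <= Mb i).
  { intros n i. unfold Mb. destruct constructive_indefinite_description as [B HB0]. simpl.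
    specialize (HB0 (vn n) (Hnb n) orig). rewrite site_add_0l in HB0.
    destruct (Hvn n) as [_ [_ Hv0]].
    replace (vn n i) with ((vn n i - vn n orig) + vn n orig) by ring.
    eapply Rle_trans; [apply Rabs_triang|]. lra. }
  destruct (compact_cfg vn Mb Hbd) as [g [Hg [z Hz]]].
  exists z. split.
  - apply (periodic_cfg_lim Q P (fun n => vn (g n))); auto. intro n; apply Hvn.
  - intros u Hu. eapply Rle_trans; [|apply (Hm1 u Hu)].
    apply le_epsilon. intros eps He.
    assert (He2 : eps / 2 > 0) by lra.
    destruct (inv_small _ He2) as [N1 HN1].
    destruct (energy_cv Q (fun n => vn (g n)) z Hz _ He2) as [N2 HN2].
    specialize (HN2 (N1 + N2)%nat ltac:(lia)). unfold R_dist in HN2. apply Rabs_def2 in HN2.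
    destruct (Hvn (g (N1 + N2)%nat)) as [_ [HvF _]]. specialize (HN1 (g (N1 + N2)%nat)).
    pose proof (incr_ge g Hg (N1 + N2)%nat). specialize (HN1 ltac:(lia)). lra.
Qed.

(* Minimizers of the periodic energy form a lattice (submodularity) invariant
   under the translations [tau k l]; applying [infimum_of_translates] inside this
   lattice produces a minimizer ordered with respect to a given index set [T]. *)
Lemma ordered_minimizer Q P z (T : site d -> Z -> Prop) :
  (Q >= 1)%nat -> per_minimizer Q P z ->
  T orig 0%Z -> (forall k l, T k l -> inner (ratvec Q P) k + IZR l >= 0) ->
  exists v, per_minimizer Q P v /\
    (forall k l, (forall k' l', T k' l' -> T (site_add k k') (l + l')%Z) -> cfg_le v (tau k l v)) /\
    (forall k l, (forall k' l', T k' l' -> T (site_sub k' k) (l' - l)%Z) -> cfg_le (tau k l v) v).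
Proof.
  intros HQ [Hz Hzmin] H00 Hpos.
  destruct (periodic_deviation_bound Q P z HQ Hz) as [C HC].
  set (Pset := fun u => periodic_cfg Q P u /\ energy Q u = energy Q z).
  destruct (infimum_of_translates z (ratvec Q P) C T Pset) as [v [[Hvp HvF] [Ho1 Ho2]]].
  - intros i k; specialize (HC i k). unfold Rabs in HC; destruct Rcase_abs; lra.
  - exact H00.
  - exact Hpos.
  - intros k l _; split; [apply periodic_cfg_tau; auto| apply (energy_tau Q P); auto].
  - intros u0 k l [Hu0 Fu0] _. assert (Ht : periodic_cfg Q P (tau k l z)) by (apply periodic_cfg_tau; auto).
    assert (Ft : energy Q (tau k l z) = energy Q z) by (apply (energy_tau Q P); auto).
    split; [apply periodic_cfg_min; auto|].
    pose proof (energy_submodular Q u0 (tau k l z)).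
    pose proof (Hzmin _ (periodic_cfg_min _ _ _ _ Hu0 Ht)).
    pose proof (Hzmin _ (periodic_cfg_max _ _ _ _ Hu0 Ht)). lra.
  - intros un v0 Hun _ Hc. split.
    + apply (periodic_cfg_lim Q P un v0); auto; intros; apply Hun.
    + apply (UL_sequence (fun n => energy Q (un n))). apply energy_cv; auto.
      apply (Un_cv_ext (fun _ => energy Q z)); [intro n; symmetry; apply Hun| apply Un_cv_const].
  - exists v. split; [split|split]; auto. intros u Hu. rewrite HvF. auto.
Qed.

(* A (Q,P)-periodic minimizer also minimizes the (NQ,NP)-periodic problem: an
   (NQ,NP)-minimizer that is invariant under the zero-height translations by
   multiples of Q is (Q,P)-periodic, and energies scale by N^d. *)
Lemma minimizer_of_multiple_period Q P y N : (Q >= 1)%nat -> (N >= 1)%nat -> per_minimizer Q P y ->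
  forall u, periodic_cfg (N * Q) (fun a => (Z.of_nat N * P a)%Z) u -> energy (N * Q) y <= energy (N * Q) u.
Proof.
  intros HQ HN [Hy Hymin] u Hu.
  set (Q' := (N * Q)%nat). set (P' := fun a => (Z.of_nat N * P a)%Z).
  assert (HQ' : (Q' >= 1)%nat) by (unfold Q'; lia).
  set (w := ratvec Q P).
  assert (Hw : ratvec Q' P' = w) by (apply ratvec_mult; auto).
  set (T := fun (k : site d) (l : Z) => (exists m, k = zscale (Z.of_nat Q) m) /\ inner w k + IZR l = 0).
  destruct (periodic_minimizer_exists Q' P' HQ') as [wz Hwz].
  destruct (ordered_minimizer Q' P' wz T HQ' Hwz) as [v [[Hvp Hvmin] [Ho1 Ho2]]].
  - split. exists orig; apply site_ext; intro a; unfold zscale, orig; lia. rewrite inner_s0; simpl; lra.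
  - rewrite Hw. intros k l [_ H]; lra.
  - assert (Hinv : forall k l, T k l -> tau k l v = v).
    { intros k l [[m Hm] Hc]. apply cfg_ext; intro i. apply Rle_antisym.
      - apply Ho2. intros k' l' [[m' Hm'] Hc']. split.
        + exists (site_sub m' m); subst; apply site_ext; intro a; unfold zscale, site_sub; lia.
        + rewrite inner_sub, minus_IZR; lra.
      - apply Ho1. intros k' l' [[m' Hm'] Hc']. split.
        + exists (site_add m m'); subst; apply site_ext; intro a; unfold zscale, site_add; lia.
        + rewrite inner_add, plus_IZR; lra. }
    assert (HvQ : periodic_cfg Q P v).
    { intros a i. assert (E : tau (axis a (Z.of_nat Q)) (- P a)%Z v = v).
      { apply Hinv. split.
        - exists (axis a 1); apply site_ext; intro b; unfold zscale, axis; destruct (Fin.eq_dec a b); lia.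
        - unfold w; rewrite inner_ratvec_axis, opp_IZR; auto; ring. }
      pose proof (f_equal (fun f => f i) E) as X. unfold tau in X. rewrite opp_IZR in X. lra. }
    unfold Q'. rewrite (energy_decomp Q P y N Hy).
    apply Rle_trans with (energy (N * Q) v).
    + rewrite (energy_decomp Q P v N HvQ). apply Rmult_le_compat_l.
      apply pow_le, pos_INR. apply Hymin; auto.
    + apply Hvmin. exact Hu.
Qed.

Lemma perturbation_outside (B : list (site d)) (phi : config d) y j :
  supported_in_interior r B phi -> ~ In j B -> S j (cfg_add y phi) = S j y.
Proof.
  intros Hs Hj. apply HA_loc. intros i Hi. unfold cfg_add.
  destruct (Req_dec (phi i) 0) as [E|E]; [rewrite E; ring|].
  exfalso. destruct (Hs i E) as [_ H2]. apply Hj, H2. rewrite norm1_sym; auto.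
Qed.

Lemma periodized_perturbation (B : list (site d)) (phi : config d) :
  supported_in_interior r B phi -> exists K : nat, forall NQ, (NQ >= 2 * K + 1)%nat ->
  exists (psi : config d) (c : site d),
    (forall a i, psi (site_add i (axis a (Z.of_nat NQ))) = psi i) /\
    (forall j, In j B -> In j (boxlist d c NQ)) /\
    (forall y j, In j (boxlist d c NQ) -> S j (cfg_add y psi) = S j (cfg_add y phi)).
Proof.
  intros Hs. destruct (list_coord_bound B) as [Kb HKb].
  set (K := (Kb + rad + 1)%nat). exists K. intros NQ HNQ.
  set (c := fun _ : Fin.t d => (- Z.of_nat K)%Z).
  (* rep i is the representative of i modulo NQ in the box of corner c *)
  set (rep := fun (i : site d) => fun a => (c a + Z.modulo (i a - c a) (Z.of_nat NQ))%Z).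
  assert (Hrep_in : forall i, (forall a, (c a <= i a < c a + Z.of_nat NQ)%Z) -> rep i = i).
  { intros i Hi; apply site_ext; intro a; unfold rep. rewrite Z.mod_small; [lia|]. specialize (Hi a); lia. }
  assert (HBW : forall j, In j B -> In j (boxlist d c NQ)).
  { intros j Hj; apply In_boxlist; intro a; specialize (HKb j a Hj); unfold c, K; lia. }
  exists (fun i => phi (rep i)), c. split; [|split]; auto.
  - intros a i. f_equal.
    apply site_ext; intro b; unfold rep, site_add, axis. destruct (Fin.eq_dec a b).
    + replace (i b + Z.of_nat NQ - c b)%Z with ((i b - c b) + 1 * Z.of_nat NQ)%Z by lia.
      rewrite Z_mod_plus_full; auto.
    + f_equal; f_equal; lia.
  - intros y j Hj. rewrite In_boxlist in Hj. apply HA_loc; intros i Hi. unfold cfg_add. f_equal.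
    destruct (classic (forall a, (c a <= i a < c a + Z.of_nat NQ)%Z)) as [Hin|Hout].
    + rewrite Hrep_in; auto.
    + (* outside the box both perturbations vanish near j *)
      apply not_all_ex_not in Hout. destruct Hout as [a Ha].
      assert (Hia : (Z.abs (i a - j a) < Z.of_nat rad)%Z) by (apply ball_coord; auto).
      specialize (Hj a).
      assert (E1 : phi i = 0).
      { destruct (Req_dec (phi i) 0) as [E|E]; auto. exfalso. destruct (Hs i E) as [Hb _].
        apply HBW in Hb. rewrite In_boxlist in Hb. apply Ha, Hb. }
      assert (E2 : phi (rep i) = 0).
      { destruct (Req_dec (phi (rep i)) 0) as [E|E]; auto. exfalso. destruct (Hs _ E) as [Hb _].
        specialize (HKb _ a Hb). unfold rep, c in HKb. unfold c in Hj, Ha.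
        destruct (Z_lt_le_dec (i a) (- Z.of_nat K)) as [Hlt|Hge].
        - replace (i a - - Z.of_nat K)%Z with ((i a + Z.of_nat K + Z.of_nat NQ) + (-1) * Z.of_nat NQ)%Z in HKb by lia.
          rewrite Z_mod_plus_full, Z.mod_small in HKb by lia. unfold K in *; lia.
        - replace (i a - - Z.of_nat K)%Z with ((i a + Z.of_nat K - Z.of_nat NQ) + 1 * Z.of_nat NQ)%Z in HKb by lia.
          rewrite Z_mod_plus_full, Z.mod_small in HKb by lia. unfold K in *; lia. }
      rewrite E1, E2; auto.
Qed.

(* Periodic minimizers are global minimizers: compare the perturbed configuration
   with its periodization, which competes in a periodic problem of larger period. *)
Lemma periodic_minimizer_global Q P y : (Q >= 1)%nat -> per_minimizer Q P y -> global_minimizer S r y.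
Proof.
  intros HQ Hymin B phi HBnd Hs.
  assert (Hy : periodic_cfg Q P y) by apply Hymin.
  destruct (periodized_perturbation B phi Hs) as [K HK].
  set (N := (2 * K + 1)%nat). set (NQ := (N * Q)%nat).
  destruct (HK NQ ltac:(unfold NQ, N; nia)) as [psi [c [Hpsi [HBW Hloc]]]].
  set (Y := cfg_add y psi). set (P' := fun a => (Z.of_nat N * P a)%Z).
  assert (Hy' : periodic_cfg NQ P' y) by (apply periodic_cfg_mult; auto).
  assert (HYper : periodic_cfg NQ P' Y).
  { intros a i. unfold Y, cfg_add. rewrite Hy', Hpsi. ring. }
  assert (Hmin := minimizer_of_multiple_period Q P y N HQ ltac:(unfold N; lia) Hymin Y HYper).
  fold NQ in Hmin.
  assert (E1 : energy NQ Y = boxsum d c NQ (fun j => S j (cfg_add y phi))).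
  { unfold energy. rewrite <- (boxsum_shift d NQ _ c) by (apply (periodic_cfg_S_periodic NQ P' Y HYper)).
    apply boxsum_ext; intros j Hj; apply Hloc; auto. }
  assert (E2 : energy NQ y = boxsum d c NQ (fun j => S j y)).
  { unfold energy. rewrite <- (boxsum_shift d NQ _ c) by (apply (periodic_cfg_S_periodic NQ P' y Hy')). auto. }
  assert (E3 : boxsum d c NQ (fun j => S j (cfg_add y phi)) - boxsum d c NQ (fun j => S j y) =
               W S B (cfg_add y phi) - W S B y).
  { unfold boxsum. rewrite <- lsum_minus, !W_lsum, <- lsum_minus.
    apply lsum_sub; auto. apply NoDup_boxlist.
    intros j Hj. cbv beta. rewrite (perturbation_outside B phi y j Hs Hj); ring. }
  lra.
Qed.

Lemma rational_ordered_minimizer Q (P : Fin.t d -> Z) : (Q >= 1)%nat -> exists y, global_minimizer S r y /\ ordered (ratvec Q P) y.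
Proof.
  intros HQ. set (w := ratvec Q P).
  set (T := fun (k : site d) (l : Z) => inner w k + IZR l >= 0).
  destruct (periodic_minimizer_exists Q P HQ) as [z Hz].
  destruct (ordered_minimizer Q P z T HQ Hz) as [y [Hy [Ho1 Ho2]]].
  - unfold T; rewrite inner_s0; simpl; lra.
  - auto.
  - exists y. split.
    + apply (periodic_minimizer_global Q P y HQ Hy).
    + intros k l; split; intro Hc.
      * apply Ho1. intros k' l' Hp; unfold T in *; rewrite inner_add, plus_IZR; lra.
      * apply Ho2. intros k' l' Hp; unfold T in *; rewrite inner_sub, minus_IZR; lra.
Qed.

Lemma birkhoff_limit (w : Fin.t d -> R) : exists x, global_minimizer S r x /\ Birkhoff x /\
  forall i k, Rabs (x (site_add i k) - x i - inner w k) <= 1.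
Proof.
  set (wn := rat_approx w).
  assert (Hrat : forall n, exists y, global_minimizer S r y /\ ordered (wn n) y /\ Rabs (y orig) <= 1).
  { intro n. destruct (rational_ordered_minimizer (Datatypes.S n) (fun a => floorZ (INR (Datatypes.S n) * w a)) ltac:(lia))
      as [y [Hg Ho]].
    exists (tau orig (- floorZ (y orig)) y). split; [apply global_minimizer_tau; auto|split; [apply ordered_tau; auto|]].
    unfold tau. rewrite site_add_0r, opp_IZR. pose proof (floorZ_spec (y orig)).
    unfold Rabs; destruct Rcase_abs; lra. }
  set (zn := fun n => proj1_sig (constructive_indefinite_description _ (Hrat n))).
  assert (Hzn : forall n, global_minimizer S r (zn n) /\ ordered (wn n) (zn n) /\ Rabs (zn n orig) <= 1).
  { intro n; unfold zn; destruct constructive_indefinite_description; auto. }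
  assert (Hbd : forall n i, Rabs (zn n i) <= 2 + sumFin d (fun a => (Rabs (w a) + 1) * IZR (Z.abs (i a)))).
  { intros n i. destruct (Hzn n) as [_ [Ho H0]].
    apply (ordered_site_bound w (wn n)); auto. intro a; apply rat_approx_bound. }
  destruct (compact_cfg zn _ Hbd) as [g [Hg [x Hx]]].
  exists x. split; [|split].
  - apply (global_minimizer_limit (fun n => zn (g n))); auto. intro n; apply Hzn.
  - intros k l. apply (comparable_limit (fun n => zn (g n)) (fun n => tau k l (zn (g n)))); auto.
    + intro i; unfold tau. apply CV_plus; auto. apply Un_cv_const.
    + intro n. destruct (Hzn (g n)) as [_ [Ho _]]. destruct (Rle_dec 0 (inner (wn (g n)) k + IZR l)).
      * left; apply (proj1 (Ho k l)); lra.
      * right; apply (proj2 (Ho k l)); lra.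
  - intros i k.
    assert (Hinner : Un_cv (fun n => inner (wn (g n)) k) (inner w k)).
    { unfold inner. apply (sumFin_cv d (fun n a => wn (g n) a * IZR (k a))). intro a.
      apply CV_mult; [|apply Un_cv_const]. apply (Un_cv_sub (fun n => wn n a)); auto. apply rat_approx_cv. }
    assert (Hc : Un_cv (fun n => zn (g n) (site_add i k) - zn (g n) i - inner (wn (g n)) k)
                       (x (site_add i k) - x i - inner w k)).
    { apply CV_minus; [apply CV_minus|]; auto. }
    assert (Hb : forall n, Rabs (zn (g n) (site_add i k) - zn (g n) i - inner (wn (g n)) k) <= 1).
    { intro n; apply ordered_deviation, Hzn. }
    apply Rabs_le. split.
    + apply (Un_cv_le (fun _ => -1) _ _ _ (Un_cv_const _) Hc). intro n; specialize (Hb n); apply Rabs_le_inv in Hb; lra.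
    + apply (Un_cv_le _ (fun _ => 1) _ _ Hc (Un_cv_const _)). intro n; specialize (Hb n); apply Rabs_le_inv in Hb; lra.
Qed.

(* Ordering step: inside the class of global minimizers comparable with all
   translates of such an x, the infimum of the translates of x of nonnegative
   height is a global minimizer ordered with respect to w. *)
Lemma ordered_global_minimizer (w : Fin.t d -> R) (x : config d) :
  global_minimizer S r x -> Birkhoff x -> (forall i k, Rabs (x (site_add i k) - x i - inner w k) <= 1) ->
  exists g, global_minimizer S r g /\ ordered w g.
Proof.
  intros Hxgm Hxbir Hxdev.
  set (T := fun (k : site d) (l : Z) => inner w k + IZR l >= 0).
  set (Pset := fun u => global_minimizer S r u /\ forall k l, comparable u (tau k l x)).
  assert (Hcomp : forall k l k' l', comparable (tau k l x) (tau k' l' x)).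
  { intros k l k' l'.
    replace (tau k' l' x) with (tau k l (tau (site_sub k' k) (l' - l) x))
      by (rewrite tau_tau; f_equal; [apply site_ext; intro a; unfold site_add, site_sub; lia|lia]).
    destruct (Hxbir (site_sub k' k) (l' - l)%Z) as [H|H]; [left|right]; apply tau_mono; auto. }
  destruct (infimum_of_translates x w 1 T Pset) as [g [[Hggm _] [Ho1 Ho2]]].
  - intros i k; specialize (Hxdev i k). apply Rabs_le_inv in Hxdev; lra.
  - unfold T; rewrite inner_s0; simpl; lra.
  - auto.
  - intros k l _; split; [apply global_minimizer_tau; auto|]. intros; apply Hcomp.
  - intros u k l [Hu Hc] _. destruct (Hc k l) as [H|H].
    + replace (cfg_min u (tau k l x)) with u; [split; auto|].
      apply cfg_ext; intro i; unfold cfg_min; rewrite Rmin_left; auto.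
    + replace (cfg_min u (tau k l x)) with (tau k l x); [split; [apply global_minimizer_tau; auto|intros; apply Hcomp]|].
      apply cfg_ext; intro i; unfold cfg_min; rewrite Rmin_right; auto.
  - intros un v Hun _ Hc. split.
    + apply (global_minimizer_limit un); auto. intro n; apply Hun.
    + intros k l. apply (comparable_limit un (fun _ => tau k l x)); auto.
      * intro i; apply Un_cv_const.
      * intro n; apply Hun.
  - exists g. split; auto. intros k l; split; intro Hc.
    + apply Ho1. intros k' l' Hp; unfold T in *; rewrite inner_add, plus_IZR; lra.
    + apply Ho2. intros k' l' Hp; unfold T in *; rewrite inner_sub, minus_IZR; lra.
Qed.

Lemma Bbar_global_minimizer_exists (w : Fin.t d -> R) : exists x, Bbar w x /\ global_minimizer S r x.
Proof.
  destruct (birkhoff_limit w) as [x [Hxgm [Hxbir Hxdev]]].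
  destruct (ordered_global_minimizer w x Hxgm Hxbir Hxdev) as [g [Hg Ho]].
  exists g. split; [apply ordered_Bbar|]; auto.
Qed.

End Potentials.

Theorem mainTheorem7
  (d : nat) (S : site d -> config d -> R) (r : R)
  (D1 : site d -> site d -> config d -> R)
  (D2 : site d -> site d -> site d -> config d -> R)
  (Hr : 0 < r)
  (HA_loc : forall j x y, (forall i, norm1 (site_sub i j) <= r -> x i = y i) ->
              S j x = S j y)
  (HA_d1 : forall j i, has_partial i (S j) (D1 j i))
  (HA_d2 : forall j i k, has_partial k (D1 j i) (D2 j i k))
  (HA_c0 : forall j, cfg_continuous (S j))
  (HA_c1 : forall j i, cfg_continuous (D1 j i))
  (HA_c2 : forall j i k, cfg_continuous (D2 j i k))
  (HB : forall j k l x, S j (tau k l x) = S (site_add j k) x)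
  (HC_bdd : forall j, exists m, forall x, m <= S j x)
  (HC_coer : forall j k, norm1 (site_sub k j) = 1 ->
     forall M, exists R0, forall x, R0 < Rabs (x k - x j) -> M < S j x)
  (HD1 : forall j i k x, i <> k -> D2 j i k x <= 0)
  (HD2 : forall i k x, norm1 (site_sub i k) = 1 -> D2 i i k x < 0)
  (HE : exists C, forall j i k x, Rabs (D2 j i k x) <= C) :
  forall omega : Fin.t d -> R,
    exists x : config d, Bbar omega x /\ global_minimizer S r x.
Proof.
  intro omega.
  exact (Bbar_global_minimizer_exists d S r D1 D2 Hr HA_loc HA_d1 HA_d2 HA_c0 HB HC_bdd HC_coer HD1 omega).
Qed.
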